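(* Let $C$ be a bivariate copula that is stochastically increasing (SI) or stochastically decreasing (SD). Then \[ \xi(C)\le|\rho(C)|, \] with equality if and only if $C\in\{W,\Pi,M\}$, where $W(u,v)=\max\{u+v-1,0\}$, $\Pi(u,v)=uv$ and $M(u,v)=\min\{u,v\}$.
   Context: A (bivariate) copula is a function $C:[0,1]^2\to[0,1]$ that is grounded, has uniform margins and is 2-increasing. For a copula $C$, $\rho(C)=12\int_{[0,1]^2}C(u,v)\,du\,dv-3$ (Spearman's rho) and $\xi(C)=6\int_0^1\int_0^1(\partial_1C(t,v))^2\,dt\,dv-2$ (Chatterjee's xi), with $\partial_1$ the partial derivative in the first argument. A copula $C$ is SI (resp. SD) if, for $(U,V)\sim C$, the map $u\mapsto P(V\ge v\mid U=u)$ is increasing (resp. decreasing) outside a Lebesgue null set for every $v$; equivalently, $C(\cdot,v)$ is concave (resp. convex) for every $v\in[0,1]$. *)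

From Stdlib Require Import Reals.
From Coquelicot Require Import Coquelicot.
Open Scope R_scope.

Definition I01 (x : R) : Prop := 0 <= x <= 1.

(* A bivariate copula, given as a total function R -> R -> R whose values
   on [0,1]^2 are the relevant ones. *)
Definition is_copula (C : R -> R -> R) : Prop :=
  (forall u v, I01 u -> I01 v -> 0 <= C u v <= 1) /\
  (forall u, I01 u -> C u 0 = 0) /\
  (forall v, I01 v -> C 0 v = 0) /\
  (forall u, I01 u -> C u 1 = u) /\
  (forall v, I01 v -> C 1 v = v) /\
  (forall u1 u2 v1 v2, I01 u1 -> I01 u2 -> I01 v1 -> I01 v2 ->
     u1 <= u2 -> v1 <= v2 ->
     0 <= C u2 v2 - C u2 v1 - C u1 v2 + C u1 v1).

Definition is_SI (C : R -> R -> R) : Prop :=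
  forall v, I01 v -> forall x y l, I01 x -> I01 y -> I01 l ->
    l * C x v + (1 - l) * C y v <= C (l * x + (1 - l) * y) v.

Definition is_SD (C : R -> R -> R) : Prop :=
  forall v, I01 v -> forall x y l, I01 x -> I01 y -> I01 l ->
    C (l * x + (1 - l) * y) v <= l * C x v + (1 - l) * C y v.

Definition d1 (C : R -> R -> R) (t v : R) : R := Derive (fun s => C s v) t.

Definition rho (C : R -> R -> R) : R :=
  12 * RInt (fun v => RInt (fun u => C u v) 0 1) 0 1 - 3.

Definition xi (C : R -> R -> R) : R :=
  6 * RInt (fun v => RInt (fun t => (d1 C t v) ^ 2) 0 1) 0 1 - 2.

Definition W (u v : R) : R := Rmax (u + v - 1) 0.
Definition Pi (u v : R) : R := u * v.
Definition M (u v : R) : R := Rmin u v.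

Definition eq_on_square (C D : R -> R -> R) : Prop :=
  forall u v, I01 u -> I01 v -> C u v = D u v.

(* Fix v and, in the SI case, let h = C(., v): h is concave, h 0 = 0, h 1 = v,
   and its chord slopes lie in [0, 1].  The slopes a_0 >= ... >= a_(n-1) of h
   on the grid of mesh 1/n satisfy
     n * sum a_i^2 = (sum a_i)^2 + sum (n - 1 - 2 i) a_i - slack,
     slack = sum_(i < j) (a_i - a_j) (1 - (a_i - a_j)) >= 0.
   Since the right derivative of h is squeezed between neighbouring grid slopes,
   letting n -> oo gives  int (d1 C)^2 du <= v^2 - v + 2 int C(u, v) du,  and
   integrating in v gives xi <= rho.  In the SD case the same argument, applied
   to the concave reflected row v - C(1 - u, v), gives xi <= - rho.
   If xi = |rho|, the deficit in these row inequalities is nonnegative, one-sidedly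
   Lipschitz in v and of integral 0, hence zero on (0, 1).  Then the slack of each
   row is O(n), while two blocks of cells whose slopes differ by an amount strictly
   between 0 and 1 would contribute order n^2 to it.  So every row is u v or
   min(u, v) (resp. max(u + v - 1, 0)), and 2-increasingness forbids mixing rows
   of Pi with rows of M (resp. W). *)

From Stdlib Require Import Reals ZArith Lra Lia Classical.
From Coquelicot Require Import Coquelicot.
Open Scope R_scope.

(** * Finite sums and the slack identity *)

(* [psum g n] is the sum of the [g i] for [i < n]; Stdlib's [sum_f_R0] and
   Coquelicot's [sum_n] also include the index [n]. *)
Fixpoint psum (g : nat -> R) (n : nat) : R :=
  match n with O => 0 | S k => psum g k + g k end.

Lemma psum_S g n : psum g (S n) = psum g n + g n.
Proof. reflexivity. Qed.

Lemma psum_ext g h n : (forall i, (i < n)%nat -> g i = h i) -> psum g n = psum h n.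
Proof.
  induction n as [|n IH]; intros E; simpl; [reflexivity|].
  rewrite IH by (intros; apply E; lia). rewrite E by lia. reflexivity.
Qed.

Lemma psum_plus g h n : psum (fun i => g i + h i) n = psum g n + psum h n.
Proof. induction n; simpl; lra. Qed.

Lemma psum_scal c g n : psum (fun i => c * g i) n = c * psum g n.
Proof. induction n; simpl; [|rewrite IHn]; lra. Qed.

Lemma psum_const c n : psum (fun _ => c) n = INR n * c.
Proof. induction n; simpl psum; [simpl; lra|]. rewrite IHn, S_INR; lra. Qed.

Lemma psum_le g h n : (forall i, (i < n)%nat -> g i <= h i) -> psum g n <= psum h n.
Proof.
  induction n as [|n IH]; intros H; simpl; [lra|].
  assert (g n <= h n) by (apply H; lia).
  assert (psum g n <= psum h n) by (apply IH; intros; apply H; lia).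
  lra.
Qed.

Lemma psum_nonneg g n : (forall i, (i < n)%nat -> 0 <= g i) -> 0 <= psum g n.
Proof.
  intros H. rewrite <- (Rmult_0_r (INR n)), <- psum_const. now apply psum_le.
Qed.

Lemma psum_shift g n : psum (fun i => g (S i)) n = psum g (S n) - g O.
Proof. induction n; simpl in *; lra. Qed.

Lemma psum_telescope F n : psum (fun i => F (S i) - F i) n = F n - F O.
Proof. induction n; simpl; lra. Qed.

Lemma psum_rev g n : psum (fun i => g (n - 1 - i)%nat) n = psum g n.
Proof.
  revert g; induction n as [|n IH]; intros g; [reflexivity|].
  rewrite psum_S. replace (S n - 1 - n)%nat with O by lia.
  rewrite (psum_ext _ (fun i => g (S (n - 1 - i)))) by (intros; f_equal; lia).
  rewrite (IH (fun k => g (S k))), psum_shift; lra.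
Qed.

Lemma psum_prefix_le g m n : (forall i, (i < n)%nat -> 0 <= g i) ->
  (m <= n)%nat -> psum g m <= psum g n.
Proof.
  intros H Hm. induction n as [|n IH]; [replace m with O by lia; simpl; lra|].
  destruct (Nat.eq_dec m (S n)) as [->|]; [lra|].
  assert (0 <= g n) by (apply H; lia).
  assert (psum g m <= psum g n) by (apply IH; [intros; apply H|]; lia).
  simpl; lra.
Qed.

Lemma psum_window_le g k N n : (forall i, (i < n)%nat -> 0 <= g i) ->
  (k + N <= n)%nat -> psum (fun i => g (k + i)%nat) N <= psum g n.
Proof.
  intros H Hn.
  assert (E : psum (fun i => g (k + i)%nat) N = psum g (k + N) - psum g k).
  { clear; induction N as [|N IH]; simpl; [rewrite Nat.add_0_r; lra|].
    rewrite IH, Nat.add_succ_r; simpl; lra. }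
  assert (0 <= psum g k) by (apply psum_nonneg; intros; apply H; lia).
  assert (psum g (k + N) <= psum g n) by (apply psum_prefix_le; auto).
  lra.
Qed.

Definition phi (x : R) : R := x * (1 - x).

Definition slack (a : nat -> R) (n : nat) : R :=
  psum (fun j => psum (fun i => phi (a i - a j)) j) n.

Lemma psum_phi a x m : psum (fun i => phi (a i - x)) m =
  (1 + 2 * x) * psum a m - psum (fun i => a i ^ 2) m - INR m * (x + x ^ 2).
Proof.
  rewrite (psum_ext _ (fun i => (1 + 2 * x) * a i + ((-1) * a i ^ 2 + - (x + x ^ 2))))
    by (intros; unfold phi; ring).
  rewrite !psum_plus, !psum_scal, psum_const; ring.
Qed.

(* Sum [phi (a i - a j) = (a i - a j) - (a i - a j) ^ 2] over [i < j] and use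
   Lagrange's identity for the squares. *)
Lemma slack_identity a n :
  INR n * psum (fun i => a i ^ 2) n =
  psum a n ^ 2 + psum (fun i => (INR n - 1 - 2 * INR i) * a i) n - slack a n.
Proof.
  unfold slack; induction n as [|n IH]; [simpl; lra|].
  rewrite !psum_S, psum_phi, S_INR.
  rewrite (psum_ext (fun i => (INR n + 1 - 1 - 2 * INR i) * a i)
             (fun i => (INR n - 1 - 2 * INR i) * a i + a i)) by (intros; ring).
  rewrite psum_plus. nra.
Qed.

Lemma psum_psum a n : psum (fun k => psum a k) n = psum (fun i => (INR n - 1 - INR i) * a i) n.
Proof.
  induction n as [|n IH]; [reflexivity|].
  rewrite !psum_S, IH, S_INR.
  rewrite (psum_ext (fun i => (INR n + 1 - 1 - INR i) * a i)
             (fun i => (INR n - 1 - INR i) * a i + a i)) by (intros; ring).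
  rewrite psum_plus; ring.
Qed.

Definition slopes (F : nat -> R) (n : nat) (i : nat) : R := INR n * (F (S i) - F i).

Lemma slopes_sq_sum F n : F O = 0 ->
  INR n * psum (fun i => slopes F n i ^ 2) n =
  INR n ^ 2 * F n ^ 2 + 2 * INR n * psum F n - INR n * (INR n - 1) * F n
  - slack (slopes F n) n.
Proof.
  intros F0. rewrite slack_identity.
  assert (Hsum : psum (slopes F n) n = INR n * F n).
  { unfold slopes. rewrite psum_scal, psum_telescope, F0; ring. }
  assert (Hlin : INR n * psum F n = psum (fun i => (INR n - 1 - INR i) * slopes F n i) n).
  { rewrite <- psum_psum, <- psum_scal. apply psum_ext; intros k _.
    unfold slopes. rewrite psum_scal, psum_telescope, F0; ring. }
  rewrite (psum_ext (fun i => (INR n - 1 - 2 * INR i) * slopes F n i)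
    (fun i => 2 * ((INR n - 1 - INR i) * slopes F n i) + (- (INR n - 1)) * slopes F n i))
    by (intros; ring).
  rewrite psum_plus, !psum_scal, <- Hlin, Hsum; ring.
Qed.

Lemma slack_nonneg a n : (forall i j, (i < j < n)%nat -> 0 <= a i - a j <= 1) ->
  0 <= slack a n.
Proof.
  intros H. apply psum_nonneg; intros j Hj; apply psum_nonneg; intros i Hi.
  destruct (H i j) as [H1 H2]; [lia|]. unfold phi; nra.
Qed.

(** * Chords and right derivatives of concave functions *)

Definition chord (f : R -> R) (x y : R) : R := (f y - f x) / (y - x).

Definition concave01 (f : R -> R) : Prop :=
  forall x y l, I01 x -> I01 y -> I01 l ->
    l * f x + (1 - l) * f y <= f (l * x + (1 - l) * y).

Lemma chord_opp f x y : chord (fun s => - f s) x y = - chord f x y.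
Proof. unfold chord, Rdiv; ring. Qed.

Lemma Rdiv_le_cross A B p q : 0 < p -> 0 < q -> A * q <= B * p -> A / p <= B / q.
Proof.
  intros Hp Hq H. apply (Rmult_le_reg_r (p * q)); [nra|].
  replace (A / p * (p * q)) with (A * q) by (field; lra).
  replace (B / q * (p * q)) with (B * p) by (field; lra). lra.
Qed.

Lemma chord_three_points f : concave01 f -> forall x y z, 0 <= x -> x < y -> y < z -> z <= 1 ->
  chord f x z <= chord f x y /\ chord f y z <= chord f x z.
Proof.
  intros Hc x y z Hx Hxy Hyz Hz.
  set (l := (z - y) / (z - x)).
  assert (Hl : I01 l).
  { unfold l, I01; split; [apply Rdiv_le_0_compat; lra|].
    apply Rmult_le_reg_r with (z - x); [lra|]. field_simplify; lra. }
  assert (Hy : l * x + (1 - l) * z = y) by (unfold l; field; lra).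
  pose proof (Hc x z l) as Hc'. rewrite Hy in Hc'.
  assert (Hk : (z - y) * f x + (y - x) * f z <= (z - x) * f y).
  { assert (l * f x + (1 - l) * f z <= f y) by (apply Hc'; unfold I01; auto; lra).
    replace ((z - y) * f x + (y - x) * f z) with ((z - x) * (l * f x + (1 - l) * f z))
      by (unfold l; field; lra).
    apply Rmult_le_compat_l; lra. }
  unfold chord; split; apply Rdiv_le_cross; nra.
Qed.

Lemma chord_antitone f : concave01 f -> forall a b c d, 0 <= a -> a < b -> c < d -> d <= 1 ->
  a <= c -> b <= d -> chord f c d <= chord f a b.
Proof.
  intros Hc a b c d Ha Hab Hcd Hd Hac Hbd.
  assert (chord f a d <= chord f a b).
  { destruct (Req_dec b d) as [->|]; [lra|]. apply (chord_three_points f Hc a b d); lra. }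
  assert (chord f c d <= chord f a d).
  { destruct (Req_dec a c) as [->|]; [lra|]. apply (chord_three_points f Hc a c d); lra. }
  lra.
Qed.

Lemma nat_gt (x : R) : {n : nat | x < INR n}.
Proof.
  exists (Z.to_nat (up (Rabs x))). destruct (archimed (Rabs x)) as [H1 _].
  pose proof (Rle_abs x). pose proof (Rabs_pos x).
  rewrite INR_IZR_INZ, Z2Nat.id; [lra|]. apply le_IZR; lra.
Qed.

Lemma eventually_inv_small e : 0 < e -> eventually (fun n => 0 < / (INR n + 1) <= e).
Proof.
  intros He. destruct (nat_gt (/ e)) as [N HN]. exists N; intros n Hn.
  apply le_INR in Hn. pose proof (pos_INR N).
  split; [apply Rinv_0_lt_compat; lra|].
  rewrite <- (Rinv_inv e). apply Rinv_le_contravar; [apply Rinv_0_lt_compat|]; lra.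
Qed.

Lemma Lim_seq_between (u : nat -> R) lo hi : eventually (fun n => lo <= u n <= hi) ->
  Lim_seq u = Finite (real (Lim_seq u)) /\ lo <= real (Lim_seq u) <= hi.
Proof.
  intros [N HN].
  assert (A : Rbar_le (Lim_seq (fun _ => lo)) (Lim_seq u))
    by (apply Lim_seq_le_loc; exists N; intros; apply HN; auto).
  assert (B : Rbar_le (Lim_seq u) (Lim_seq (fun _ => hi)))
    by (apply Lim_seq_le_loc; exists N; intros; apply HN; auto).
  rewrite Lim_seq_const in A, B.
  destruct (Lim_seq u); simpl in *; tauto.
Qed.

(* [Derive f t] is by definition the limit of the difference quotients along
   [h = 1/(n+1)], whether or not [f] is differentiable at [t].  For a row of a
   copula this is the right derivative; at [t = 1] it depends on values outside
   the unit square, whence the constraints [t < 1] below. *)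
Lemma Derive_right_quotients f t :
  Derive f t = real (Lim_seq (fun n =>
    (f (t + (0 + / (INR n + 1))) - f t) / (0 + / (INR n + 1)))).
Proof. reflexivity. Qed.

Lemma Derive_between f t lo hi e : 0 < e ->
  (forall h, 0 < h <= e -> lo <= chord f t (t + h) <= hi) -> lo <= Derive f t <= hi.
Proof.
  intros He H. rewrite Derive_right_quotients. apply (Lim_seq_between _ lo hi).
  destruct (eventually_inv_small e He) as [N HN]. exists N; intros n Hn.
  rewrite Rplus_0_l. specialize (H _ (HN n Hn)). unfold chord in H.
  now replace (t + / (INR n + 1) - t) with (/ (INR n + 1)) in H by ring.
Qed.

Lemma Derive_le f g t lo hi e : 0 < e ->
  (forall h, 0 < h <= e -> lo <= chord f t (t + h) <= hi) ->
  (forall h, 0 < h <= e -> lo <= chord g t (t + h) <= hi) ->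
  (forall h, 0 < h <= e -> chord f t (t + h) <= chord g t (t + h)) ->
  Derive f t <= Derive g t.
Proof.
  intros He Hf Hg Hfg. rewrite !Derive_right_quotients.
  destruct (eventually_inv_small e He) as [N HN].
  assert (E : forall k n, (k (t + (0 + / (INR n + 1))) - k t) / (0 + / (INR n + 1))
                          = chord k t (t + / (INR n + 1)))
    by (intros; unfold chord; rewrite Rplus_0_l; f_equal; ring).
  destruct (Lim_seq_between (fun n => chord f t (t + / (INR n + 1))) lo hi) as [Ef _];
    [exists N; intros; apply Hf, HN; auto|].
  destruct (Lim_seq_between (fun n => chord g t (t + / (INR n + 1))) lo hi) as [Eg _];
    [exists N; intros; apply Hg, HN; auto|].
  rewrite (Lim_seq_ext _ _ (E f)), (Lim_seq_ext _ _ (E g)).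
  pose proof (Lim_seq_le_loc (fun n => chord f t (t + / (INR n + 1)))
                              (fun n => chord g t (t + / (INR n + 1)))) as L.
  rewrite Ef, Eg in L. apply L. exists N; intros; apply Hfg, HN; auto.
Qed.

Section ConcaveDerivative.
Variables (g : R -> R) (lo hi : R).
Hypothesis g_concave : concave01 g.
Hypothesis g_chord : forall x y, 0 <= x -> x < y -> y <= 1 -> lo <= chord g x y <= hi.

Lemma Derive_concave_le_chord a t : 0 <= a < t -> t < 1 -> Derive g t <= chord g a t.
Proof.
  intros Ha Ht. apply (Derive_between _ _ lo _ (1 - t)); [lra|].
  intros h Hh. split; [apply g_chord; lra|]. apply chord_antitone; auto; lra.
Qed.

Lemma chord_le_Derive_concave t b : 0 <= t < b -> b <= 1 -> chord g t b <= Derive g t.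
Proof.
  intros Ht Hb. apply (Derive_between _ _ _ hi (b - t)); [lra|].
  intros h Hh. split; [apply chord_antitone; auto; lra|apply g_chord; lra].
Qed.

End ConcaveDerivative.

(** * Riemann integrals on a grid *)

Lemma unif_part_nth a b n i : (i <= S n)%nat ->
  seq.nth 0 (unif_part a b n) i = a + INR i * (b - a) / (INR n + 1).
Proof. intros H. unfold unif_part. rewrite seq.nth_mkseq; auto. apply SSR_leq; lia. Qed.

Lemma Riemann_sum_midpoints_telescope (g f : R -> R) (d : R) :
  (forall x y, y - x = d -> g ((x + y) / 2) = f y - f x) ->
  forall n a b, b - a = (INR n + 1) * d ->
  Riemann_sum g (SF_seq_f2 (fun x y => (x + y) / 2) (unif_part a b n)) = d * (f b - f a).
Proof.
  intros Hg n; induction n as [|n IH]; intros a b Hab.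
  - unfold unif_part, seq.mkseq, Riemann_sum, SF_seq_f2; simpl.
    change (scal ?x ?y) with (x * y); change (plus ?x ?y) with (x + y);
      change (@zero R_ModuleSpace) with 0.
    simpl in Hab. rewrite Hg by (field_simplify; lra).
    replace (a + 1 * (b - a) / (0 + 1)) with b by field.
    replace (a + 0 * (b - a) / (0 + 1)) with a by field.
    replace (b - a) with d by lra. ring.
  - rewrite unif_part_S, SF_cons_f2 by (unfold unif_part; rewrite seq.size_mkseq; lia).
    rewrite Riemann_sum_cons, head_unif_part.
    set (a' := (a * INR (S n) + b) / INR (S (S n))).
    rewrite S_INR in Hab. pose proof (pos_INR n).
    assert (Ha' : b - a' = (INR n + 1) * d).
    { unfold a'; rewrite !S_INR. apply (Rmult_eq_reg_r (INR n + 1 + 1)); [|lra].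
      field_simplify; [nra|lra]. }
    assert (E : SF_h (SF_seq_f2 (fun x y => (x + y) / 2) (unif_part a' b n)) = a')
      by apply (head_unif_part 0).
    rewrite E; simpl fst; simpl snd. rewrite IH by exact Ha'.
    change (scal ?x ?y) with (x * y); change (plus ?x ?y) with (x + y).
    rewrite Hg by lra. replace (a' - a) with d by lra.
    change (d * (f a' - f a) + d * (f b - f a') = d * (f b - f a) :> R); ring.
Qed.

Lemma nondecreasing_midpoint_oscillation f x d t : 0 <= d -> x <= t <= x + d ->
  (forall y z, x <= y -> y <= z -> z <= x + d -> f y <= f z) ->
  Rabs (f t - f (x + d / 2)) <= f (x + d / 2 + d / 2) - f (x + d / 2 - d / 2).
Proof.
  intros Hd Ht Hm.
  replace (x + d / 2 + d / 2) with (x + d) by field.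
  replace (x + d / 2 - d / 2) with x by field.
  assert (f x <= f t) by (apply Hm; lra). assert (f t <= f (x + d)) by (apply Hm; lra).
  assert (f x <= f (x + d / 2)) by (apply Hm; lra).
  assert (f (x + d / 2) <= f (x + d)) by (apply Hm; lra).
  apply Rabs_le; lra.
Qed.

(* The step function with the midpoint values of [f] is within the oscillation
   of [f] on each cell, and these oscillations add up to [d (f b - f a)]. *)
Lemma nondecreasing_Riemann_integrable f a b : a <= b ->
  (forall x y, a <= x -> x <= y -> y <= b -> f x <= f y) -> Riemann_integrable f a b.
Proof.
  intros Hab Hm eps.
  set (K := (b - a) * (f b - f a)).
  assert (HK : 0 <= K) by (assert (f a <= f b) by (apply Hm; lra); unfold K; nra).
  pose proof (cond_pos eps) as He.
  destruct (nat_gt (K / eps)) as [n Hn]. pose proof (pos_INR n) as Hn0.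
  set (d := (b - a) / (INR n + 1)).
  assert (Hd0 : 0 <= d) by (unfold d; apply Rdiv_le_0_compat; lra).
  assert (Hnd : (INR n + 1) * d = b - a) by (unfold d; field; lra).
  exists (sf_SF_val_fun f a b n).
  exists (sf_SF_val_fun (fun y => f (y + d / 2) - f (y - d / 2)) a b n).
  split.
  - intros t Ht. rewrite Rmin_left, Rmax_right in Ht by lra.
    unfold sf_SF_val_fun. destruct (Rle_dec a b) as [H|H]; [simpl|lra].
    rewrite (SF_val_fun_rw f a b n t Ht), (SF_val_fun_rw _ a b n t Ht).
    assert (Hq : forall X, a + X * (b - a) / (INR n + 1) = a + X * d)
      by (intros; unfold d, Rdiv; ring).
    assert (Cell : forall i, (i <= n)%nat -> a + INR i * d <= t <= a + (INR i + 1) * d ->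
      Rabs (f t - f (a + (INR i + / 2) * d))
        <= f (a + (INR i + / 2) * d + d / 2) - f (a + (INR i + / 2) * d - d / 2)).
    { intros i Hi Hti. apply le_INR in Hi. pose proof (pos_INR i).
      replace (a + (INR i + / 2) * d) with (a + INR i * d + d / 2) by field.
      apply nondecreasing_midpoint_oscillation; [lra|lra|].
      intros y z Hy Hyz Hz. apply Hm; nra. }
    destruct (unif_part_nat a b n t Ht) as [[i [Hi Hs]] | Hi]; simpl.
    + unfold unif_part in Hs; rewrite seq.size_mkseq in Hs.
      rewrite !unif_part_nth, S_INR, !Hq in Hi by lia.
      rewrite !Hq. apply Cell; [lia|lra].
    + rewrite !unif_part_nth, S_INR, !Hq in Hi by lia.
      rewrite !Hq. apply Cell; [lia|lra].
  - rewrite <- RInt_val_Reals. unfold RInt_val.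
    rewrite (Riemann_sum_midpoints_telescope _ f d);
      [|intros x y Hxy; f_equal; f_equal; lra|lra].
    replace (d * (f b - f a)) with (K / (INR n + 1)) by (unfold K, d; field; lra).
    rewrite Rabs_pos_eq by (apply Rdiv_le_0_compat; lra).
    apply (Rmult_lt_reg_r (INR n + 1)); [lra|].
    replace (K / (INR n + 1) * (INR n + 1)) with K by (field; lra).
    assert (K = K / eps * eps) by (field; lra). nra.
Qed.

Lemma ex_RInt_nondecreasing f a b : a <= b ->
  (forall x y, a <= x -> x <= y -> y <= b -> f x <= f y) -> ex_RInt f a b.
Proof. intros; now apply ex_RInt_Reals_1, nondecreasing_Riemann_integrable. Qed.

Lemma ex_RInt_nonincreasing f a b : a <= b ->
  (forall x y, a <= x -> x <= y -> y <= b -> f y <= f x) -> ex_RInt f a b.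
Proof.
  intros Hab Hf.
  apply (ex_RInt_ext (fun x => opp (- f x))); [intros; apply Ropp_involutive|].
  apply (ex_RInt_opp (V := R_CompleteNormedModule) (fun x => - f x)).
  apply ex_RInt_nondecreasing; auto.
  intros; apply Ropp_le_contravar; auto.
Qed.

Definition grid (g : R -> R) (n k : nat) : R := g (INR k / INR n).

Definition grid_slack (g : R -> R) (n : nat) : R := slack (slopes (grid g n) n) n.

Section Grid.
Variable n : nat.
Hypothesis n_pos : (1 <= n)%nat.

Let INR_n_ge1 : 1 <= INR n.
Proof. apply le_INR in n_pos; exact n_pos. Qed.

Lemma grid_node_range k : (k <= n)%nat -> 0 <= INR k / INR n <= 1.
Proof.
  intros Hk. apply le_INR in Hk. pose proof (pos_INR k).
  split; [apply Rdiv_le_0_compat; lra|].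
  apply (Rmult_le_reg_r (INR n)); [lra|]. field_simplify; lra.
Qed.

Lemma grid_node_le i j : (i <= j)%nat -> INR i / INR n <= INR j / INR n.
Proof.
  intros Hij. apply Rmult_le_compat_r; [left; apply Rinv_0_lt_compat; lra|].
  now apply le_INR.
Qed.

Lemma grid_node_lt k : INR k / INR n < INR (S k) / INR n.
Proof. rewrite S_INR. apply (Rmult_lt_reg_r (INR n)); [lra|]. field_simplify; lra. Qed.

Lemma grid_cell_length k : INR (S k) / INR n - INR k / INR n = / INR n.
Proof. rewrite S_INR; field; lra. Qed.

Lemma RInt_grid_cells (g : R -> R) : ex_RInt g 0 1 ->
  RInt g 0 1 = psum (fun i => RInt g (INR i / INR n) (INR (S i) / INR n)) n.
Proof.
  intros Hg.
  assert (Hsub : forall x y, 0 <= x <= y -> y <= 1 -> ex_RInt g x y).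
  { intros x y Hx Hy. apply (ex_RInt_Chasles_2 g 0); [lra|].
    apply (ex_RInt_Chasles_1 g 0 y 1); [lra|exact Hg]. }
  assert (H : forall k, (k <= n)%nat -> RInt g 0 (INR k / INR n)
    = psum (fun i => RInt g (INR i / INR n) (INR (S i) / INR n)) k).
  { induction k as [|k IH]; intros Hk.
    - simpl. replace (0 / INR n) with 0 by (field; lra). now rewrite RInt_point.
    - pose proof (grid_node_range k ltac:(lia)). pose proof (grid_node_range (S k) Hk).
      pose proof (grid_node_lt k).
      rewrite psum_S, <- IH by lia.
      symmetry; apply (RInt_Chasles g); apply Hsub; lra. }
  rewrite <- H by lia. f_equal; field; lra.
Qed.

Lemma RInt_cell_const c i : RInt (fun _ => c) (INR i / INR n) (INR (S i) / INR n) = c / INR n.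
Proof. rewrite RInt_const, grid_cell_length. change (/ INR n * c = c / INR n); field; lra. Qed.

Lemma RInt_le_grid_sum (g : R -> R) B : ex_RInt g 0 1 ->
  (forall i, (i < n)%nat -> forall t, INR i / INR n < t < INR (S i) / INR n -> g t <= B i) ->
  RInt g 0 1 <= psum B n / INR n.
Proof.
  intros Hg HB. rewrite RInt_grid_cells by exact Hg.
  replace (psum B n / INR n) with (psum (fun i => B i / INR n) n)
    by (unfold Rdiv; rewrite Rmult_comm, <- psum_scal; apply psum_ext; intros; ring).
  apply psum_le; intros i Hi.
  pose proof (grid_node_range i ltac:(lia)). pose proof (grid_node_range (S i) Hi).
  pose proof (grid_node_lt i).
  rewrite <- (RInt_cell_const (B i) i).
  apply RInt_le; [lra| |apply ex_RInt_const|intros; apply HB; auto].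
  apply (ex_RInt_Chasles_2 g 0); [lra|]. apply (ex_RInt_Chasles_1 g 0 _ 1); [lra|exact Hg].
Qed.

Lemma grid_sum_le_RInt (g : R -> R) B : ex_RInt g 0 1 ->
  (forall i, (i < n)%nat -> forall t, INR i / INR n < t < INR (S i) / INR n -> B i <= g t) ->
  psum B n / INR n <= RInt g 0 1.
Proof.
  intros Hg HB.
  assert (Hopp : ex_RInt (fun t => - g t) 0 1)
    by apply (ex_RInt_opp (V := R_CompleteNormedModule) g _ _ Hg).
  pose proof (RInt_le_grid_sum (fun t => - g t) (fun i => - B i) Hopp) as H.
  replace (RInt (fun t => - g t) 0 1) with (- RInt g 0 1) in H
    by (symmetry; exact (RInt_opp (V := R_CompleteNormedModule) g _ _ Hg)).
  rewrite (psum_ext _ (fun i => -1 * B i)), psum_scal in H by (intros; ring).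
  assert (- RInt g 0 1 <= -1 * psum B n / INR n); [|unfold Rdiv in *; lra].
  apply H. intros i Hi t Ht. apply Ropp_le_contravar, HB; auto.
Qed.

Lemma slopes_grid g k : slopes (grid g n) n k = chord g (INR k / INR n) (INR (S k) / INR n).
Proof. unfold slopes, grid, chord. rewrite S_INR. field. lra. Qed.

Lemma grid_first g : grid g n O = g 0.
Proof. unfold grid. f_equal. simpl. field. lra. Qed.

Lemma grid_last g : grid g n n = g 1.
Proof. unfold grid. f_equal. field. lra. Qed.

Lemma grid_slopes_sq_mean g v : g 0 = 0 -> g 1 = v ->
  psum (fun i => slopes (grid g n) n i ^ 2) n / INR n
  = v ^ 2 - v + v / INR n + 2 * (psum (grid g n) n / INR n) - grid_slack g n / INR n ^ 2.
Proof.
  intros g0 g1. pose proof (slopes_sq_sum (grid g n) n) as E.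
  rewrite grid_first, grid_last, g1 in E; specialize (E g0).
  unfold grid_slack. apply (Rmult_eq_reg_r (INR n ^ 2)); [|apply pow_nonzero; lra].
  field_simplify; [|lra|lra]. nra.
Qed.

Lemma grid_slopes_gap g i j : concave01 g ->
  (forall x y, 0 <= x -> x < y -> y <= 1 -> 0 <= chord g x y <= 1) -> (i < j < n)%nat ->
  0 <= slopes (grid g n) n i - slopes (grid g n) n j <= 1.
Proof.
  intros Hc Hb Hij. rewrite !slopes_grid.
  pose proof (grid_node_range i ltac:(lia)).
  pose proof (grid_node_range (S j) ltac:(lia)).
  pose proof (grid_node_lt i). pose proof (grid_node_lt j).
  pose proof (grid_node_le i j ltac:(lia)).
  pose proof (grid_node_le (S i) (S j) ltac:(lia)).
  assert (chord g (INR j / INR n) (INR (S j) / INR n)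
          <= chord g (INR i / INR n) (INR (S i) / INR n)) by (apply chord_antitone; auto; lra).
  assert (0 <= chord g (INR i / INR n) (INR (S i) / INR n) <= 1) by (apply Hb; lra).
  assert (0 <= chord g (INR j / INR n) (INR (S j) / INR n) <= 1) by (apply Hb; lra).
  lra.
Qed.

Lemma grid_slack_nonneg g : concave01 g ->
  (forall x y, 0 <= x -> x < y -> y <= 1 -> 0 <= chord g x y <= 1) -> 0 <= grid_slack g n.
Proof. intros Hc Hb. apply slack_nonneg. intros; now apply grid_slopes_gap. Qed.

End Grid.

Lemma le_of_le_plus_2_div x y : (forall n, (1 <= n)%nat -> x <= y + 2 / INR n) -> x <= y.
Proof.
  intros H. destruct (Rle_dec x y) as [|Hxy]; [assumption|exfalso].
  destruct (nat_gt (2 / (x - y))) as [n Hn].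
  assert (0 < 2 / (x - y)) by (apply Rdiv_lt_0_compat; lra).
  assert (Hn1 : (1 <= n)%nat) by (destruct n; [simpl in Hn; lra|lia]).
  specialize (H n Hn1). apply le_INR in Hn1.
  assert (2 / INR n < x - y); [|lra].
  apply (Rmult_lt_reg_r (INR n)); [lra|].
  replace (2 / INR n * INR n) with 2 by (field; lra).
  replace 2 with (2 / (x - y) * (x - y)) at 1 by (field; lra).
  rewrite Rmult_comm; apply Rmult_lt_compat_l; lra.
Qed.

(* [auto_derive] leaves equalities in Coquelicot's [R_AbsRing], unknown to [field]. *)
Ltac field_R := match goal with |- ?a = ?b => change (@eq R a b); field end.

Lemma RInt_lin_comb (f g : R -> R) a b (al be : R) : ex_RInt f a b -> ex_RInt g a b ->
  ex_RInt (fun x => al * f x + be * g x) a b /\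
  RInt (fun x => al * f x + be * g x) a b = al * RInt f a b + be * RInt g a b.
Proof.
  intros Hf Hg.
  pose proof (ex_RInt_scal f a b al Hf) as H1. pose proof (ex_RInt_scal g a b be Hg) as H2.
  split; [exact (ex_RInt_plus _ _ a b H1 H2)|].
  assert (E1 : RInt (fun x => al * f x) a b = al * RInt f a b) by exact (RInt_scal f a b al Hf).
  assert (E2 : RInt (fun x => be * g x) a b = be * RInt g a b) by exact (RInt_scal g a b be Hg).
  rewrite <- E1, <- E2. exact (RInt_plus _ _ a b H1 H2).
Qed.

Lemma ex_RInt_primitive (p P : R -> R) a b :
  (forall x, is_derive P x (p x)) -> (forall x, ex_derive p x) ->
  ex_RInt p a b /\ RInt p a b = P b - P a.
Proof.
  intros HP Hp.
  assert (H : is_RInt p a b (minus (P b) (P a))).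
  { apply (is_RInt_derive (V := R_CompleteNormedModule) P p); [intros; apply HP|].
    intros x _; exact (ex_derive_continuous p x (Hp x)). }
  split; [eexists; exact H|exact (is_RInt_unique (V := R_CompleteNormedModule) p a b _ H)].
Qed.

Lemma RInt_ext_open (f g : R -> R) a b : a <= b -> (forall x, a < x < b -> f x = g x) ->
  RInt f a b = RInt g a b.
Proof.
  intros Hab H. apply RInt_ext. intros x Hx. rewrite Rmin_left, Rmax_right in Hx by lra. auto.
Qed.

Lemma RInt_split_at (f f1 f2 : R -> R) c : 0 < c < 1 ->
  (forall t, 0 < t < c -> f t = f1 t) -> (forall t, c < t < 1 -> f t = f2 t) ->
  ex_RInt f1 0 c -> ex_RInt f2 c 1 -> RInt f 0 1 = RInt f1 0 c + RInt f2 c 1.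
Proof.
  intros Hc H1 H2 E1 E2.
  assert (F1 : ex_RInt f 0 c).
  { apply (ex_RInt_ext f1); [|exact E1]. intros x Hx.
    rewrite Rmin_left, Rmax_right in Hx by lra. symmetry; auto. }
  assert (F2 : ex_RInt f c 1).
  { apply (ex_RInt_ext f2); [|exact E2]. intros x Hx.
    rewrite Rmin_left, Rmax_right in Hx by lra. symmetry; auto. }
  rewrite <- (RInt_Chasles f 0 c 1 F1 F2).
  rewrite (RInt_ext_open f f1 0 c), (RInt_ext_open f f2 c 1) by (auto; lra). reflexivity.
Qed.

Lemma RInt_primitive (p P : R -> R) a b :
  (forall x, is_derive P x (p x)) -> (forall x, ex_derive p x) -> RInt p a b = P b - P a.
Proof. intros. apply ex_RInt_primitive; auto. Qed.

Lemma RInt_const_R (c : R) a b : RInt (fun _ => c) a b = (b - a) * c.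
Proof. rewrite RInt_const. reflexivity. Qed.

(** * Rows of a copula *)

Lemma ex_RInt_sq_monotone (f : R -> R) :
  (forall t, 0 <= t < 1 -> 0 <= f t <= 1) ->
  (forall x y, 0 <= x <= y -> y < 1 -> f y <= f x) \/
  (forall x y, 0 <= x <= y -> y < 1 -> f x <= f y) ->
  ex_RInt (fun t => f t ^ 2) 0 1.
Proof.
  intros Hf [Hm|Hm].
  - apply (ex_RInt_ext (fun t => if Rlt_dec t 1 then f t ^ 2 else 0)).
    { intros x Hx. rewrite Rmin_left, Rmax_right in Hx by lra.
      destruct (Rlt_dec x 1); [reflexivity|lra]. }
    apply ex_RInt_nonincreasing; [lra|]. intros x y Hx Hxy Hy.
    pose proof (Hf x). pose proof (Hf y). pose proof (Hm x y).
    destruct (Rlt_dec y 1), (Rlt_dec x 1); try lra; nra.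
  - apply (ex_RInt_ext (fun t => if Rlt_dec t 1 then f t ^ 2 else 1)).
    { intros x Hx. rewrite Rmin_left, Rmax_right in Hx by lra.
      destruct (Rlt_dec x 1); [reflexivity|lra]. }
    apply ex_RInt_nondecreasing; [lra|]. intros x y Hx Hxy Hy.
    pose proof (Hf x). pose proof (Hf y). pose proof (Hm x y).
    destruct (Rlt_dec y 1), (Rlt_dec x 1); try lra; nra.
Qed.

Section Copula.
Variable C : R -> R -> R.
Hypothesis HC : is_copula C.

Lemma copula_2inc u1 u2 v1 v2 : I01 u1 -> I01 u2 -> I01 v1 -> I01 v2 -> u1 <= u2 -> v1 <= v2 ->
  C u2 v1 - C u1 v1 <= C u2 v2 - C u1 v2.
Proof.
  intros Hu1 Hu2 Hv1 Hv2 Hu Hv. destruct HC as (_ & _ & _ & _ & _ & Hinc).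
  pose proof (Hinc u1 u2 v1 v2 Hu1 Hu2 Hv1 Hv2 Hu Hv); lra.
Qed.

Let I01_0 : I01 0. Proof. unfold I01; lra. Qed.
Let I01_1 : I01 1. Proof. unfold I01; lra. Qed.

Lemma copula_nondecr_l u1 u2 v : I01 u1 -> I01 u2 -> I01 v -> u1 <= u2 -> C u1 v <= C u2 v.
Proof.
  intros Hu1 Hu2 Hv H. destruct HC as (_ & Hg & _).
  pose proof (copula_2inc u1 u2 0 v Hu1 Hu2 I01_0 Hv H (proj1 Hv)).
  rewrite !Hg in * by auto. lra.
Qed.

Lemma copula_lipschitz_l u1 u2 v : I01 u1 -> I01 u2 -> I01 v -> u1 <= u2 ->
  C u2 v - C u1 v <= u2 - u1.
Proof.
  intros Hu1 Hu2 Hv H. destruct HC as (_ & _ & _ & Hm & _).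
  pose proof (copula_2inc u1 u2 v 1 Hu1 Hu2 Hv I01_1 H (proj2 Hv)).
  rewrite !Hm in * by auto. lra.
Qed.

Lemma copula_nondecr_r u v1 v2 : I01 u -> I01 v1 -> I01 v2 -> v1 <= v2 -> C u v1 <= C u v2.
Proof.
  intros Hu Hv1 Hv2 H. destruct HC as (_ & _ & Hg & _).
  pose proof (copula_2inc 0 u v1 v2 I01_0 Hu Hv1 Hv2 (proj1 Hu) H).
  rewrite !Hg in * by auto. lra.
Qed.

Lemma copula_lipschitz_r u v1 v2 : I01 u -> I01 v1 -> I01 v2 -> v1 <= v2 ->
  C u v2 - C u v1 <= v2 - v1.
Proof.
  intros Hu Hv1 Hv2 H. destruct HC as (_ & _ & _ & _ & Hm & _).
  pose proof (copula_2inc u 1 v1 v2 Hu I01_1 Hv1 Hv2 (proj2 Hu) H).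
  rewrite !Hm in * by auto. lra.
Qed.

Lemma copula_row_chord v x y : I01 v -> 0 <= x -> x < y -> y <= 1 ->
  0 <= chord (fun s => C s v) x y <= 1.
Proof.
  intros Hv Hx Hxy Hy. unfold chord.
  assert (C x v <= C y v) by (apply copula_nondecr_l; unfold I01; auto; lra).
  assert (C y v - C x v <= y - x) by (apply copula_lipschitz_l; unfold I01; auto; lra).
  split; [apply Rdiv_le_0_compat; lra|].
  apply (Rmult_le_reg_r (y - x)); [lra|]. field_simplify; lra.
Qed.

Lemma copula_reflected_row_chord v x y : I01 v -> 0 <= x -> x < y -> y <= 1 ->
  0 <= chord (fun u => v - C (1 - u) v) x y <= 1.
Proof.
  intros Hv Hx Hxy Hy.
  replace (chord (fun u => v - C (1 - u) v) x y) with (chord (fun s => C s v) (1 - y) (1 - x))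
    by (unfold chord; field; lra).
  apply copula_row_chord; auto; lra.
Qed.

Lemma ex_RInt_copula_row v : I01 v -> ex_RInt (fun u => C u v) 0 1.
Proof.
  intros Hv. apply ex_RInt_nondecreasing; [lra|].
  intros; apply copula_nondecr_l; unfold I01; auto; lra.
Qed.

Lemma d1_range v t : I01 v -> 0 <= t < 1 -> 0 <= d1 C t v <= 1.
Proof.
  intros Hv Ht. apply (Derive_between _ _ _ _ (1 - t)); [lra|].
  intros; apply copula_row_chord; auto; lra.
Qed.

Lemma d1_nondecr_r v1 v2 t : I01 v1 -> I01 v2 -> v1 <= v2 -> 0 <= t < 1 ->
  d1 C t v1 <= d1 C t v2.
Proof.
  intros H1 H2 H12 Ht. apply (Derive_le _ _ _ 0 1 (1 - t)); [lra| | |];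
    intros h Hh; [apply copula_row_chord; auto; lra|apply copula_row_chord; auto; lra|].
  unfold chord, Rdiv. apply Rmult_le_compat_r; [left; apply Rinv_0_lt_compat; lra|].
  apply copula_2inc; auto; unfold I01; lra.
Qed.

End Copula.

Section SIRow.
Variables (C : R -> R -> R) (v : R).
Hypotheses (HC : is_copula C) (HSI : is_SI C) (Hv : I01 v).

Let row_chord x y : 0 <= x -> x < y -> y <= 1 -> 0 <= chord (fun s => C s v) x y <= 1.
Proof. now apply copula_row_chord. Qed.

Lemma d1_le_chord_SI a t : 0 <= a < t -> t < 1 -> d1 C t v <= chord (fun s => C s v) a t.
Proof. exact (Derive_concave_le_chord _ 0 1 (HSI v Hv) row_chord a t). Qed.

Lemma chord_le_d1_SI t b : 0 <= t < b -> b <= 1 -> chord (fun s => C s v) t b <= d1 C t v.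
Proof. exact (chord_le_Derive_concave _ 0 1 (HSI v Hv) row_chord t b). Qed.

Lemma ex_RInt_d1_sq_SI : ex_RInt (fun t => d1 C t v ^ 2) 0 1.
Proof.
  apply ex_RInt_sq_monotone; [intros; apply d1_range; auto|left].
  intros x y Hx Hy. destruct (Req_dec x y) as [->|]; [lra|].
  pose proof (d1_le_chord_SI x y). pose proof (chord_le_d1_SI x y). lra.
Qed.

Lemma RInt_d1_sq_le_grid_SI n : (1 <= n)%nat ->
  RInt (fun t => d1 C t v ^ 2) 0 1
  <= (1 + psum (fun i => slopes (grid (fun s => C s v) n) n i ^ 2) n) / INR n.
Proof.
  intros Hn.
  set (a := slopes (grid (fun s => C s v) n) n).
  set (B i := match i with O => 1 | S j => a j ^ 2 end).
  apply Rle_trans with (psum B n / INR n).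
  - apply RInt_le_grid_sum; [exact Hn|apply ex_RInt_d1_sq_SI|].
    intros i Hi t Ht.
    pose proof (grid_node_range n Hn i ltac:(lia)). pose proof (grid_node_range n Hn (S i) Hi).
    pose proof (d1_range C HC v t Hv ltac:(lra)).
    destruct i as [|j]; [simpl; nra|].
    pose proof (grid_node_range n Hn j ltac:(lia)). pose proof (grid_node_lt n Hn j).
    assert (d1 C t v <= a j); [|simpl; nra].
    unfold a; rewrite slopes_grid by exact Hn.
    apply Rle_trans with (chord (fun s => C s v) (INR j / INR n) t);
      [apply d1_le_chord_SI; lra|apply (chord_antitone _ (HSI v Hv)); lra].
  - apply Rmult_le_compat_r; [left; apply Rinv_0_lt_compat, lt_0_INR; lia|].
    destruct n as [|m]; [lia|].
    pose proof (psum_shift B m) as E.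
    change (psum (fun i => a i ^ 2) m = psum B (S m) - 1) in E.
    assert (psum (fun i => a i ^ 2) m <= psum (fun i => a i ^ 2) (S m))
      by (apply psum_prefix_le; [intros; apply pow2_ge_0|lia]).
    lra.
Qed.

Lemma row_bound_SI n : (1 <= n)%nat ->
  RInt (fun t => d1 C t v ^ 2) 0 1 <= v ^ 2 - v + 2 * RInt (fun u => C u v) 0 1 + 2 / INR n
    - grid_slack (fun s => C s v) n / INR n ^ 2.
Proof.
  intros Hn. pose proof (le_INR _ _ Hn) as HN; simpl in HN.
  destruct HC as (_ & _ & C0 & _ & C1 & _).
  pose proof (RInt_d1_sq_le_grid_SI n Hn) as HI.
  assert (HJ : psum (grid (fun s => C s v) n) n / INR n <= RInt (fun u => C u v) 0 1).
  { apply grid_sum_le_RInt; [exact Hn|apply ex_RInt_copula_row; auto|].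
    intros i Hi t Ht. pose proof (grid_node_range n Hn i ltac:(lia)).
    pose proof (grid_node_range n Hn (S i) Hi).
    apply copula_nondecr_l; auto; unfold I01; lra. }
  pose proof (grid_slopes_sq_mean n Hn (fun s => C s v) v (C0 v Hv) (C1 v Hv)) as E.
  rewrite Rdiv_plus_distr in HI.
  assert (v / INR n <= 1 / INR n)
    by (apply Rmult_le_compat_r; [left; apply Rinv_0_lt_compat|unfold I01 in Hv]; lra).
  replace (2 / INR n) with (1 / INR n + 1 / INR n) by (field; lra). lra.
Qed.
Lemma d1_sq_bound_SI :
  RInt (fun t => d1 C t v ^ 2) 0 1 <= v ^ 2 - v + 2 * RInt (fun u => C u v) 0 1.
Proof.
  apply le_of_le_plus_2_div. intros n Hn. pose proof (row_bound_SI n Hn).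
  assert (0 <= grid_slack (fun s => C s v) n / INR n ^ 2); [|lra].
  apply Rdiv_le_0_compat; [|apply pow_lt, lt_0_INR; lia].
  apply grid_slack_nonneg; auto. exact (HSI v Hv).
Qed.

End SIRow.

Section SDRow.
Variables (C : R -> R -> R) (v : R).
Hypotheses (HC : is_copula C) (HSD : is_SD C) (Hv : I01 v).

Let opp_row_concave : concave01 (fun s => - C s v).
Proof. intros x y l Hx Hy Hl. pose proof (HSD v Hv x y l Hx Hy Hl). lra. Qed.

Let opp_row_chord x y : 0 <= x -> x < y -> y <= 1 -> -1 <= chord (fun s => - C s v) x y <= 0.
Proof. intros. rewrite chord_opp. pose proof (copula_row_chord C HC v x y Hv). lra. Qed.

Let d1_opp t : d1 C t v = - Derive (fun s => - C s v) t.
Proof. unfold d1. rewrite Derive_opp. ring. Qed.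

Lemma chord_le_d1_SD a t : 0 <= a < t -> t < 1 -> chord (fun s => C s v) a t <= d1 C t v.
Proof.
  intros. rewrite d1_opp.
  pose proof (Derive_concave_le_chord _ _ _ opp_row_concave opp_row_chord a t).
  rewrite chord_opp in *. lra.
Qed.

Lemma d1_le_chord_SD t b : 0 <= t < b -> b <= 1 -> d1 C t v <= chord (fun s => C s v) t b.
Proof.
  intros. rewrite d1_opp.
  pose proof (chord_le_Derive_concave _ _ _ opp_row_concave opp_row_chord t b).
  rewrite chord_opp in *. lra.
Qed.

Lemma ex_RInt_d1_sq_SD : ex_RInt (fun t => d1 C t v ^ 2) 0 1.
Proof.
  apply ex_RInt_sq_monotone; [intros; apply d1_range; auto|right].
  intros x y Hx Hy. destruct (Req_dec x y) as [->|]; [lra|].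
  pose proof (d1_le_chord_SD x y). pose proof (chord_le_d1_SD x y). lra.
Qed.

Lemma SD_reflected_row_concave : concave01 (fun u => v - C (1 - u) v).
Proof.
  intros x y l Hx Hy Hl. unfold I01 in *.
  pose proof (HSD v Hv (1 - x) (1 - y) l ltac:(unfold I01; lra) ltac:(unfold I01; lra) Hl).
  replace (1 - (l * x + (1 - l) * y)) with (l * (1 - x) + (1 - l) * (1 - y)) by ring. nra.
Qed.

Section Reflection.
Variable n : nat.
Hypothesis Hn : (1 <= n)%nat.

Let grid_reflected k : (k <= n)%nat ->
  grid (fun u => v - C (1 - u) v) n k = v - grid (fun s => C s v) n (n - k).
Proof.
  intros Hk. apply le_INR in Hn. unfold grid. rewrite minus_INR by exact Hk.
  do 2 f_equal. field. simpl in Hn; lra.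
Qed.

Lemma psum_sq_slopes_reflected :
  psum (fun i => slopes (grid (fun u => v - C (1 - u) v) n) n i ^ 2) n
  = psum (fun i => slopes (grid (fun s => C s v) n) n i ^ 2) n.
Proof.
  rewrite <- (psum_rev (fun i => slopes (grid (fun s => C s v) n) n i ^ 2)).
  apply psum_ext. intros i Hi. unfold slopes. rewrite !grid_reflected by lia.
  replace (n - S i)%nat with (n - 1 - i)%nat by lia.
  replace (n - i)%nat with (S (n - 1 - i)) by lia. ring.
Qed.

Lemma psum_grid_reflected :
  psum (grid (fun u => v - C (1 - u) v) n) n
  = INR n * v - (psum (grid (fun s => C s v) n) n + v).
Proof.
  destruct HC as (_ & _ & C0 & _ & C1 & _).
  rewrite (psum_ext _ (fun k => v + (-1) * grid (fun s => C s v) n (S (n - 1 - k))))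
    by (intros k Hk; rewrite grid_reflected by lia;
        replace (n - k)%nat with (S (n - 1 - k)) by lia; ring).
  rewrite psum_plus, psum_scal, psum_const.
  rewrite (psum_rev (fun k => grid (fun s => C s v) n (S k))), psum_shift, psum_S.
  rewrite (grid_first n Hn), (grid_last n Hn), C0, C1 by exact Hv. ring.
Qed.

End Reflection.

Lemma RInt_d1_sq_le_grid_SD n : (1 <= n)%nat ->
  RInt (fun t => d1 C t v ^ 2) 0 1
  <= (1 + psum (fun i => slopes (grid (fun s => C s v) n) n i ^ 2) n) / INR n.
Proof.
  intros Hn.
  set (a := slopes (grid (fun s => C s v) n) n).
  set (B i := if Nat.ltb (S i) n then a (S i) ^ 2 else 1).
  apply Rle_trans with (psum B n / INR n).
  - apply RInt_le_grid_sum; [exact Hn|apply ex_RInt_d1_sq_SD|].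
    intros i Hi t Ht.
    pose proof (grid_node_range n Hn i ltac:(lia)). pose proof (grid_node_range n Hn (S i) Hi).
    pose proof (d1_range C HC v t Hv ltac:(lra)).
    unfold B. destruct (Nat.ltb_spec (S i) n) as [Hlt|]; [|nra].
    pose proof (grid_node_range n Hn (S (S i)) Hlt). pose proof (grid_node_lt n Hn (S i)).
    assert (d1 C t v <= a (S i)); [|nra].
    unfold a; rewrite slopes_grid by exact Hn.
    apply Rle_trans with (chord (fun s => C s v) t (INR (S (S i)) / INR n));
      [apply d1_le_chord_SD; lra|].
    pose proof (chord_antitone _ opp_row_concave t (INR (S (S i)) / INR n)
      (INR (S i) / INR n) (INR (S (S i)) / INR n)).
    rewrite !chord_opp in *. lra.
  - apply Rmult_le_compat_r; [left; apply Rinv_0_lt_compat, lt_0_INR; lia|].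
    destruct n as [|m]; [lia|]. unfold B. rewrite psum_S, Nat.ltb_irrefl.
    rewrite (psum_ext _ (fun i => a (S i) ^ 2))
      by (intros i Hi; replace (Nat.ltb (S i) (S m)) with true
           by (symmetry; apply Nat.ltb_lt; lia); reflexivity).
    rewrite (psum_shift (fun i => a i ^ 2)). pose proof (pow2_ge_0 (a O)). lra.
Qed.

Lemma row_bound_SD n : (1 <= n)%nat ->
  RInt (fun t => d1 C t v ^ 2) 0 1 <= v ^ 2 + v - 2 * RInt (fun u => C u v) 0 1 + 2 / INR n
    - grid_slack (fun u => v - C (1 - u) v) n / INR n ^ 2.
Proof.
  intros Hn. pose proof (le_INR _ _ Hn) as HN; simpl in HN.
  destruct HC as (_ & _ & C0 & _ & C1 & _).
  pose proof (RInt_d1_sq_le_grid_SD n Hn) as HI.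
  set (Fsum := psum (grid (fun s => C s v) n) n).
  assert (HJ : RInt (fun u => C u v) 0 1 <= (Fsum + v) / INR n).
  { replace (Fsum + v) with (psum (fun k => grid (fun s => C s v) n (S k)) n)
      by (unfold Fsum; rewrite psum_shift, psum_S, grid_first, grid_last, C0, C1 by auto; ring).
    apply RInt_le_grid_sum; [exact Hn|apply ex_RInt_copula_row; auto|].
    intros i Hi t Ht. pose proof (grid_node_range n Hn i ltac:(lia)).
    pose proof (grid_node_range n Hn (S i) Hi).
    apply copula_nondecr_l; auto; unfold I01; lra. }
  pose proof (grid_slopes_sq_mean n Hn (fun u => v - C (1 - u) v) v) as E.
  rewrite psum_sq_slopes_reflected, psum_grid_reflected in E by exact Hn.
  rewrite Rminus_0_r, Rminus_diag, C0, C1 in E by exact Hv.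
  specialize (E ltac:(ring) ltac:(ring)). fold Fsum in E.
  replace ((INR n * v - (Fsum + v)) / INR n) with (v - Fsum / INR n - v / INR n) in E
    by (field; lra).
  rewrite Rdiv_plus_distr in HI, HJ.
  assert (v / INR n <= 1 / INR n)
    by (apply Rmult_le_compat_r; [left; apply Rinv_0_lt_compat|unfold I01 in Hv]; lra).
  replace (2 / INR n) with (1 / INR n + 1 / INR n) by (field; lra). lra.
Qed.

Lemma d1_sq_bound_SD :
  RInt (fun t => d1 C t v ^ 2) 0 1 <= v ^ 2 + v - 2 * RInt (fun u => C u v) 0 1.
Proof.
  apply le_of_le_plus_2_div. intros n Hn. pose proof (row_bound_SD n Hn).
  assert (0 <= grid_slack (fun u => v - C (1 - u) v) n / INR n ^ 2); [|lra].
  apply Rdiv_le_0_compat; [|apply pow_lt, lt_0_INR; lia].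
  apply grid_slack_nonneg; auto using SD_reflected_row_concave.
  intros; apply copula_reflected_row_chord; auto.
Qed.

End SDRow.

(** * The inequality *)

Lemma ex_RInt_d1_sq C v : is_copula C -> is_SI C \/ is_SD C -> I01 v ->
  ex_RInt (fun t => d1 C t v ^ 2) 0 1.
Proof. intros HC [H|H] Hv; [apply ex_RInt_d1_sq_SI|apply ex_RInt_d1_sq_SD]; auto. Qed.

Definition xi_row (C : R -> R -> R) (v : R) : R := RInt (fun t => d1 C t v ^ 2) 0 1.
Definition rho_row (C : R -> R -> R) (v : R) : R := RInt (fun u => C u v) 0 1.

(* The sign [s] is [1] in the SI case and [-1] in the SD case. *)
Definition deficit (C : R -> R -> R) (s v : R) : R :=
  v ^ 2 - s * v + 2 * s * rho_row C v - xi_row C v.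

Section Deficit.
Variables (C : R -> R -> R) (s : R).
Hypothesis HC : is_copula C.
Hypothesis Hs : s = 1 /\ is_SI C \/ s = -1 /\ is_SD C.

Let Hmon : is_SI C \/ is_SD C.
Proof. destruct Hs as [[_ H]|[_ H]]; auto. Qed.

Lemma xi_row_nondecr v1 v2 : I01 v1 -> I01 v2 -> v1 <= v2 -> xi_row C v1 <= xi_row C v2.
Proof.
  intros H1 H2 H12. apply RInt_le; [lra|apply ex_RInt_d1_sq; auto..|].
  intros t Ht. pose proof (d1_range C HC v1 t H1 ltac:(lra)).
  pose proof (d1_nondecr_r C HC v1 v2 t H1 H2 H12 ltac:(lra)). nra.
Qed.

Lemma rho_row_nondecr v1 v2 : I01 v1 -> I01 v2 -> v1 <= v2 -> rho_row C v1 <= rho_row C v2.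
Proof.
  intros H1 H2 H12. apply RInt_le; [lra|apply ex_RInt_copula_row; auto..|].
  intros t Ht. apply copula_nondecr_r; auto. unfold I01; lra.
Qed.

Lemma rho_row_lipschitz v1 v2 : I01 v1 -> I01 v2 -> v1 <= v2 ->
  rho_row C v2 - rho_row C v1 <= v2 - v1.
Proof.
  intros H1 H2 H12. unfold rho_row.
  rewrite <- (RInt_minus (V := R_CompleteNormedModule)) by (apply ex_RInt_copula_row; auto).
  replace (v2 - v1) with (RInt (fun _ => v2 - v1) 0 1)
    by (rewrite RInt_const; change ((1 - 0) * (v2 - v1) = v2 - v1); ring).
  apply RInt_le; [lra| |apply ex_RInt_const|].
  - apply (ex_RInt_minus (V := R_CompleteNormedModule)); apply ex_RInt_copula_row; auto.
  - intros t Ht. apply copula_lipschitz_r; auto. unfold I01; lra.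
Qed.

Lemma deficit_nonneg v : I01 v -> 0 <= deficit C s v.
Proof.
  intros Hv. unfold deficit, xi_row, rho_row.
  destruct Hs as [[-> H]|[-> H]];
    [pose proof (d1_sq_bound_SI C v HC H Hv)|pose proof (d1_sq_bound_SD C v HC H Hv)]; lra.
Qed.

Lemma deficit_left_lipschitz v w : I01 v -> I01 w -> v <= w ->
  deficit C s w - 5 * (w - v) <= deficit C s v.
Proof.
  intros Hv Hw Hvw. unfold deficit.
  pose proof (xi_row_nondecr v w Hv Hw Hvw).
  pose proof (rho_row_nondecr v w Hv Hw Hvw). pose proof (rho_row_lipschitz v w Hv Hw Hvw).
  unfold I01 in *. destruct Hs as [[-> _]|[-> _]]; nra.
Qed.

Lemma RInt_deficit : ex_RInt (deficit C s) 0 1 /\ RInt (deficit C s) 0 1 = (s * rho C - xi C) / 6.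
Proof.
  assert (HI : ex_RInt (xi_row C) 0 1)
    by (apply ex_RInt_nondecreasing; [lra|intros; apply xi_row_nondecr; unfold I01; lra]).
  assert (HJ : ex_RInt (rho_row C) 0 1)
    by (apply ex_RInt_nondecreasing; [lra|intros; apply rho_row_nondecr; unfold I01; lra]).
  destruct (ex_RInt_primitive (fun v => v ^ 2 - s * v) (fun v => v ^ 3 / 3 - s * v ^ 2 / 2) 0 1)
    as [HP EP]; [intros; auto_derive; auto; field_R|intros; auto_derive; auto|].
  destruct (RInt_lin_comb _ _ 0 1 (2 * s) (-1) HJ HI) as [HL EL].
  destruct (RInt_lin_comb _ _ 0 1 1 1 HP HL) as [HD ED].
  assert (E : forall v, 1 * (v ^ 2 - s * v) + 1 * (2 * s * rho_row C v + -1 * xi_row C v)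
                        = deficit C s v) by (intros; unfold deficit; ring).
  split; [exact (ex_RInt_ext _ _ 0 1 (fun v _ => E v) HD)|].
  rewrite <- (RInt_ext _ _ 0 1 (fun v _ => E v)), ED, EP, EL.
  unfold rho, xi. fold (rho_row C) (xi_row C). field_R.
Qed.

Lemma xi_le_signed_rho : xi C <= s * rho C.
Proof.
  destruct RInt_deficit as [H E].
  assert (0 <= RInt (deficit C s) 0 1); [|lra].
  apply RInt_ge_0; [lra|exact H|]. intros; apply deficit_nonneg; unfold I01; lra.
Qed.

End Deficit.

(** * Concave functions with small slack *)

Lemma nat_floor x : 0 <= x -> exists k : nat, INR k <= x < INR k + 1.
Proof.
  intros Hx. destruct (archimed x) as [H1 H2].
  assert (Hu : (1 <= up x)%Z) by (assert (0 < up x)%Z by (apply lt_IZR; lra); lia).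
  exists (Z.to_nat (up x - 1)). rewrite INR_IZR_INZ, Z2Nat.id, minus_IZR by lia. simpl; lra.
Qed.

Lemma nat_ceil_strict x : 0 <= x -> exists k : nat, x < INR k <= x + 1.
Proof.
  intros Hx. destruct (archimed x) as [H1 H2].
  assert (0 <= up x)%Z by (apply le_IZR; lra).
  exists (Z.to_nat (up x)). rewrite INR_IZR_INZ, Z2Nat.id by lia. lra.
Qed.

Lemma grid_block n p q : (1 <= n)%nat -> 0 <= p -> q <= 1 -> 2 <= INR n * (q - p) ->
  exists i0 N, p <= INR i0 / INR n /\ INR (i0 + N) / INR n <= q /\ INR n * (q - p) - 2 <= INR N.
Proof.
  intros Hn Hp Hq H2. apply le_INR in Hn; simpl in Hn.
  destruct (nat_ceil_strict (INR n * p)) as [i0 [Hi1 Hi2]]; [nra|].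
  destruct (nat_floor (INR n * q)) as [k [Hk1 Hk2]]; [nra|].
  assert (Hik : (i0 <= k)%nat) by (apply INR_le; nra).
  exists i0, (k - i0)%nat. replace (i0 + (k - i0))%nat with k by lia.
  rewrite minus_INR by exact Hik.
  split; [|split]; [apply (Rmult_le_reg_r (INR n)); [lra|]; field_simplify; nra..|nra].
Qed.

Lemma slack_ge_blocks s n i0 N1 j0 N2 c :
  (forall i j, (i < j < n)%nat -> 0 <= phi (s i - s j)) ->
  (i0 + N1 <= j0)%nat -> (j0 + N2 <= n)%nat ->
  (forall l m, (l < N1)%nat -> (m < N2)%nat -> c <= phi (s (i0 + l)%nat - s (j0 + m)%nat)) ->
  INR N2 * (INR N1 * c) <= slack s n.
Proof.
  intros Hpos Hij Hjn Hc. unfold slack. rewrite <- !psum_const.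
  apply Rle_trans with (psum (fun m => psum (fun i => phi (s i - s (j0 + m)%nat)) (j0 + m)) N2).
  - apply psum_le; intros m Hm.
    apply Rle_trans with (psum (fun l => phi (s (i0 + l)%nat - s (j0 + m)%nat)) N1).
    + apply psum_le; intros l Hl; auto.
    + apply (psum_window_le (fun i => phi (s i - s (j0 + m)%nat))); [intros; apply Hpos|]; lia.
  - apply (psum_window_le (fun j => psum (fun i => phi (s i - s j)) j)); [|lia].
    intros j Hj; apply psum_nonneg; intros; apply Hpos; lia.
Qed.

Section GridSlackLowerBound.
Variables (g : R -> R) (n : nat).
Hypothesis g_concave : concave01 g.
Hypothesis g_chord : forall x y, 0 <= x -> x < y -> y <= 1 -> 0 <= chord g x y <= 1.
Hypothesis n_pos : (1 <= n)%nat.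

Lemma slopes_grid_between a b c d k : 0 <= a -> a < b -> b <= INR k / INR n ->
  INR (S k) / INR n <= c -> c < d -> d <= 1 ->
  chord g c d <= slopes (grid g n) n k <= chord g a b.
Proof.
  intros. rewrite slopes_grid by exact n_pos. pose proof (grid_node_lt n n_pos k).
  split; apply chord_antitone; auto; lra.
Qed.

Lemma grid_slack_lower_bound a b c c' d' d e e' :
  0 <= a -> a < b -> b < c -> c < c' -> c' <= d' -> d' < d -> d < e -> e < e' -> e' <= 1 ->
  2 <= INR n * (c - b) -> 2 <= INR n * (e - d) ->
  (INR n * (c - b) - 2) * (INR n * (e - d) - 2)
    * ((chord g c c' - chord g d' d) * (1 - (chord g a b - chord g e e')))
  <= grid_slack g n.
Proof.
  intros Ha Hab Hbc Hcc Hcd Hdd Hde Hee He Hn1 Hn2.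
  pose proof (le_INR _ _ n_pos) as HN; simpl in HN.
  destruct (grid_block n b c n_pos ltac:(lra) ltac:(lra) Hn1) as (i0 & N1 & Hi0 & Hi1 & HN1).
  destruct (grid_block n d e n_pos ltac:(lra) ltac:(lra) Hn2) as (j0 & N2 & Hj0 & Hj1 & HN2).
  assert (Hij : (i0 + N1 <= j0)%nat).
  { apply INR_le, (Rmult_le_reg_r (/ INR n)); [apply Rinv_0_lt_compat; lra|].
    change (INR (i0 + N1) / INR n <= INR j0 / INR n); lra. }
  assert (Hjn : (j0 + N2 <= n)%nat).
  { apply INR_le, (Rmult_le_reg_r (/ INR n)); [apply Rinv_0_lt_compat; lra|].
    change (INR (j0 + N2) / INR n <= INR n / INR n).
    replace (INR n / INR n) with 1 by (field; lra); lra. }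
  set (delta1 := chord g c c' - chord g d' d).
  set (delta2 := 1 - (chord g a b - chord g e e')).
  assert (0 <= delta1) by (assert (chord g d' d <= chord g c c')
                             by (apply chord_antitone; auto; lra); unfold delta1; lra).
  assert (0 <= delta2)
    by (pose proof (g_chord a b); pose proof (g_chord e e'); unfold delta2; lra).
  apply Rle_trans with (INR N2 * (INR N1 * (delta1 * delta2))).
  - replace (INR N2 * (INR N1 * (delta1 * delta2)))
      with (INR N1 * INR N2 * (delta1 * delta2)) by ring.
    apply Rmult_le_compat_r; [nra|apply Rmult_le_compat; lra].
  - apply (slack_ge_blocks _ n i0 N1 j0 N2); [|lia|lia|].
    + intros i j Hij'.
      destruct (grid_slopes_gap n n_pos g i j g_concave g_chord Hij'). unfold phi; nra.
    + intros l m Hl Hm.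
      pose proof (grid_node_le n n_pos i0 (i0 + l) ltac:(lia)).
      pose proof (grid_node_le n n_pos (S (i0 + l)) (i0 + N1) ltac:(lia)).
      pose proof (grid_node_le n n_pos j0 (j0 + m) ltac:(lia)).
      pose proof (grid_node_le n n_pos (S (j0 + m)) (j0 + N2) ltac:(lia)).
      destruct (slopes_grid_between a b c c' (i0 + l)); try lra.
      destruct (slopes_grid_between d' d e e' (j0 + m)); try lra.
      unfold phi, delta1, delta2 in *. nra.
Qed.

End GridSlackLowerBound.

(* The outer chords bound the slopes on [[b, c]] and [[d, e]]: a slope drop
   strictly between 0 and 1 from one block to the other is excluded. *)
Definition chord_dichotomy (g : R -> R) : Prop :=
  forall a b c c' d' d e e', 0 <= a -> a < b -> b < c -> c < c' -> c' <= d' -> d' < d ->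
    d < e -> e < e' -> e' <= 1 ->
    chord g c c' - chord g d' d <= 0 \/ 1 <= chord g a b - chord g e e'.

Lemma chord_dichotomy_of_small_slack g : concave01 g ->
  (forall x y, 0 <= x -> x < y -> y <= 1 -> 0 <= chord g x y <= 1) ->
  (forall n, (1 <= n)%nat -> grid_slack g n / INR n ^ 2 <= 2 / INR n) -> chord_dichotomy g.
Proof.
  intros Hc Hb Hs a b c c' d' d e e' Ha Hab Hbc Hcc Hcd Hdd Hde Hee He.
  destruct (Rle_dec (chord g c c' - chord g d' d) 0) as [|X]; [now left|].
  destruct (Rle_dec 1 (chord g a b - chord g e e')) as [|Y]; [now right|exfalso].
  set (K := (c - b) * (e - d) * ((chord g c c' - chord g d' d)
                                 * (1 - (chord g a b - chord g e e'))) / 4).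
  assert (HK : 0 < K).
  { unfold K. apply Rdiv_lt_0_compat; [|lra].
    apply Rmult_lt_0_compat; [apply Rmult_lt_0_compat|apply Rmult_lt_0_compat]; lra. }
  destruct (nat_gt (4 / (c - b) + 4 / (e - d) + 2 / K)) as [n Hn].
  assert (0 < 4 / (c - b)) by (apply Rdiv_lt_0_compat; lra).
  assert (0 < 4 / (e - d)) by (apply Rdiv_lt_0_compat; lra).
  assert (0 < 2 / K) by (apply Rdiv_lt_0_compat; lra).
  assert (Hn1 : (1 <= n)%nat) by (destruct n; [simpl in Hn; lra|lia]).
  assert (HN : 0 < INR n) by lra.
  assert (Hgt : forall x y, 0 < x -> y / x < INR n -> y < INR n * x).
  { intros x y Hx Hyx. apply (Rmult_lt_compat_r x) in Hyx; [|exact Hx].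
    replace (y / x * x) with y in Hyx by (field; lra); lra. }
  assert (A1 : 4 < INR n * (c - b)) by (apply Hgt; lra).
  assert (A2 : 4 < INR n * (e - d)) by (apply Hgt; lra).
  assert (A3 : 2 < INR n * K) by (apply Hgt; lra).
  pose proof (grid_slack_lower_bound g n Hc Hb Hn1 a b c c' d' d e e'
                Ha Hab Hbc Hcc Hcd Hdd Hde Hee He ltac:(lra) ltac:(lra)) as L.
  assert (INR n ^ 2 * K <= grid_slack g n).
  { eapply Rle_trans; [|exact L].
    replace (INR n ^ 2 * K) with ((INR n * (c - b) / 2) * (INR n * (e - d) / 2)
      * ((chord g c c' - chord g d' d) * (1 - (chord g a b - chord g e e')))) by (unfold K; field).
    apply Rmult_le_compat_r; [apply Rmult_le_pos; lra|apply Rmult_le_compat; lra]. }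
  pose proof (Hs n Hn1) as Hsmall.
  assert (K <= grid_slack g n / INR n ^ 2).
  { apply (Rmult_le_reg_r (INR n ^ 2)); [apply pow_lt; lra|].
    replace (grid_slack g n / INR n ^ 2 * INR n ^ 2) with (grid_slack g n) by (field; lra). lra. }
  assert (2 / INR n < K).
  { apply (Rmult_lt_reg_r (INR n)); [exact HN|].
    replace (2 / INR n * INR n) with 2 by (field; lra). lra. }
  lra.
Qed.

Lemma eq0_of_abs_le_small D m : 0 < m -> (forall e, 0 < e < m -> Rabs D <= 2 * e) -> D = 0.
Proof.
  intros Hm H. destruct (Req_dec D 0) as [|HD]; [assumption|exfalso].
  pose proof (Rabs_pos_lt D HD).
  set (e := Rmin (m / 2) (Rabs D / 4)).
  assert (0 < e) by (apply Rmin_glb_lt; lra).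
  assert (e <= m / 2) by apply Rmin_l. assert (e <= Rabs D / 4) by apply Rmin_r.
  pose proof (H e ltac:(lra)). lra.
Qed.

Section ConcaveStructure.
Variables (g : R -> R) (v : R).
Hypothesis g_concave : concave01 g.
Hypothesis g_chord : forall x y, 0 <= x -> x < y -> y <= 1 -> 0 <= chord g x y <= 1.
Hypothesis g0 : g 0 = 0.
Hypothesis g1 : g 1 = v.
Hypothesis g_dichotomy : chord_dichotomy g.

Lemma increment_bounds x y : 0 <= x -> x <= y -> y <= 1 -> 0 <= g y - g x <= y - x.
Proof.
  intros Hx Hxy Hy. destruct (Req_dec x y) as [->|]; [lra|].
  pose proof (g_chord x y Hx ltac:(lra) Hy) as Hc. unfold chord in Hc.
  replace (g y - g x) with ((g y - g x) / (y - x) * (y - x)) by (field; lra).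
  split; [apply Rmult_le_pos; lra|].
  rewrite <- (Rmult_1_l (y - x)) at 3. apply Rmult_le_compat_r; lra.
Qed.

Lemma chord_affine x y al b0 : x <> y -> g x = b0 + al * x -> g y = b0 + al * y ->
  chord g x y = al.
Proof. intros Hxy Ex Ey. unfold chord. rewrite Ex, Ey. field. lra. Qed.

Lemma affine_of_equal_chords lo hi : 0 <= lo -> lo < hi -> hi <= 1 ->
  (forall p q r s, lo < p -> p < q -> q <= r -> r < s -> s < hi -> chord g p q = chord g r s) ->
  exists al, forall x, lo <= x <= hi -> g x = g lo + al * (x - lo).
Proof.
  intros Hlo Hlh Hhi H.
  set (m1 := lo + (hi - lo) / 3). set (m2 := lo + 2 * (hi - lo) / 3).
  set (al := chord g m1 m2). exists al.
  assert (Hal : forall x y, lo < x -> x < y -> y < hi -> g y - g x = al * (y - x)).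
  { intros x y Hx Hxy Hy.
    set (t := (Rmax y m2 + hi) / 2). set (t' := (t + hi) / 2).
    pose proof (Rmax_l y m2). pose proof (Rmax_r y m2).
    assert (Rmax y m2 < hi) by (apply Rmax_lub_lt; unfold m2; lra).
    assert (chord g x y = al).
    { unfold al. rewrite (H x y t t'), (H m1 m2 t t') by (unfold t', t, m1, m2 in *; lra).
      reflexivity. }
    unfold chord in *. replace (g y - g x) with ((g y - g x) / (y - x) * (y - x))
      by (field; lra). congruence. }
  assert (Hin : forall x, lo < x < hi -> g x = g lo + al * (x - lo)).
  { intros x Hx. assert (g x - g lo - al * (x - lo) = 0); [|lra].
    apply (eq0_of_abs_le_small _ (x - lo)); [lra|]. intros e He.
    pose proof (Hal (lo + e) x ltac:(lra) ltac:(lra) ltac:(lra)).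
    pose proof (increment_bounds lo (lo + e) Hlo ltac:(lra) ltac:(lra)).
    assert (0 <= al <= 1) by (apply g_chord; unfold m1, m2; lra).
    apply Rabs_le; nra. }
  intros x Hx. destruct (Req_dec x lo) as [->|]; [ring|].
  destruct (Req_dec x hi) as [->|]; [|apply Hin; lra].
  assert (g hi - g lo - al * (hi - lo) = 0); [|lra].
  apply (eq0_of_abs_le_small _ (hi - lo)); [lra|]. intros e He.
  pose proof (Hin (hi - e) ltac:(lra)).
  pose proof (increment_bounds (hi - e) hi ltac:(lra) ltac:(lra) Hhi).
  assert (0 <= al <= 1) by (apply g_chord; unfold m1, m2; lra).
  apply Rabs_le; nra.
Qed.

Lemma equal_chords_of_dichotomy a b c c' d' d e e' :
  0 <= a -> a < b -> b < c -> c < c' -> c' <= d' -> d' < d -> d < e -> e < e' -> e' <= 1 ->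
  chord g a b - chord g e e' < 1 -> chord g c c' = chord g d' d.
Proof.
  intros. assert (chord g d' d <= chord g c c') by (apply chord_antitone; auto; lra).
  destruct (g_dichotomy a b c c' d' d e e'); auto; lra.
Qed.

Lemma equal_chords_right b : 0 < b -> chord g 0 b < 1 ->
  forall p q r s, b < p -> p < q -> q <= r -> r < s -> s < 1 -> chord g p q = chord g r s.
Proof.
  intros Hb Hc p q r s. intros.
  apply (equal_chords_of_dichotomy 0 b p q r s ((s + 1) / 2) 1); try lra.
  pose proof (g_chord ((s + 1) / 2) 1). lra.
Qed.

Lemma equal_chords_left e : e < 1 -> 0 < chord g e 1 ->
  forall p q r s, 0 < p -> p < q -> q <= r -> r < s -> s < e -> chord g p q = chord g r s.
Proof.
  intros He Hc p q r s. intros.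
  apply (equal_chords_of_dichotomy 0 (p / 2) p q r s e 1); try lra.
  pose proof (g_chord 0 (p / 2)). lra.
Qed.

(* A point [u1] with [g u1 < min u1 v] makes both chords through [u1] have
   slopes in (0, 1), so no slope can drop by [1]: [g] is linear. *)
Lemma concave_dichotomy_cases :
  (forall u, I01 u -> g u = u * v) \/ (forall u, I01 u -> g u = Rmin u v).
Proof.
  destruct (classic (exists u1, I01 u1 /\ g u1 < u1 /\ g u1 < v)) as [[u1 [Hu1 [A B]]]|N].
  - left. unfold I01 in Hu1.
    assert (Hu0 : 0 < u1) by (destruct (Req_dec u1 0) as [->|]; lra).
    assert (Hu2 : u1 < 1) by (destruct (Req_dec u1 1) as [->|]; lra).
    assert (Hl1 : chord g 0 u1 < 1).
    { unfold chord. rewrite g0. apply (Rmult_lt_reg_r u1); [lra|].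
      replace ((g u1 - 0) / (u1 - 0) * u1) with (g u1) by (field; lra). lra. }
    assert (Hr0 : 0 < chord g u1 1) by (unfold chord; rewrite g1; apply Rdiv_lt_0_compat; lra).
    destruct (affine_of_equal_chords u1 1 ltac:(lra) Hu2 ltac:(lra)) as [be Hr].
    { intros; apply (equal_chords_right u1); auto; lra. }
    destruct (affine_of_equal_chords 0 u1 ltac:(lra) Hu0 ltac:(lra)) as [al Hl].
    { intros; apply (equal_chords_left u1); auto; lra. }
    rewrite g0 in Hl.
    assert (Ea : chord g (u1 / 2) u1 = al)
      by (apply (chord_affine _ _ al 0); [lra|rewrite Hl; lra..]).
    assert (Eb : chord g u1 ((1 + u1) / 2) = be)
      by (apply (chord_affine _ _ be (g u1 - be * u1)); [lra|rewrite Hr; lra..]).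
    assert (Ea' : chord g 0 (u1 / 4) = al)
      by (apply (chord_affine _ _ al 0); [lra|rewrite Hl; lra..]).
    assert (Eb' : chord g ((3 + u1) / 4) 1 = be)
      by (apply (chord_affine _ _ be (g u1 - be * u1)); [lra|rewrite Hr; lra..]).
    assert (Hab : al = be).
    { rewrite <- Ea, <- Eb.
      apply (equal_chords_of_dichotomy 0 (u1 / 4) _ _ _ _ ((3 + u1) / 4) 1); try lra.
      pose proof (Hl u1 ltac:(lra)). pose proof (g_chord u1 ((1 + u1) / 2)). nra. }
    rewrite <- Hab in Hr.
    assert (Hg : forall x, 0 <= x <= 1 -> g x = al * x).
    { intros x Hx. destruct (Rle_dec x u1).
      - rewrite Hl; [ring|lra].
      - rewrite (Hr x) by lra. rewrite (Hl u1) by lra. ring. }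
    assert (Hav : al = v) by (rewrite <- g1, Hg; lra).
    intros u Hu. rewrite Hg by exact Hu. rewrite Hav; ring.
  - right. intros u Hu. unfold I01 in Hu.
    pose proof (increment_bounds 0 u ltac:(lra) ltac:(lra) ltac:(lra)).
    pose proof (increment_bounds u 1 ltac:(lra) ltac:(lra) ltac:(lra)).
    assert (~ (g u < u /\ g u < v)) by (intros Z; apply N; exists u; unfold I01; auto).
    unfold Rmin. destruct (Rle_dec u v); lra.
Qed.

End ConcaveStructure.

(** * The equality cases *)

Lemma eq0_of_RInt_eq0 (D : R -> R) (L : R) : 0 <= L -> ex_RInt D 0 1 -> RInt D 0 1 = 0 ->
  (forall v, 0 < v < 1 -> 0 <= D v) ->
  (forall v w, 0 < v -> v <= w -> w < 1 -> D w - L * (w - v) <= D v) ->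
  forall w, 0 < w < 1 -> D w = 0.
Proof.
  intros HL Hex H0 Hpos Hlip w Hw.
  destruct (Rle_dec (D w) 0) as [|Hd]; [pose proof (Hpos w Hw); lra|exfalso].
  set (e := Rmin (w / 2) (D w / (2 * L + 2))).
  assert (He : 0 < e) by (apply Rmin_glb_lt; [lra|apply Rdiv_lt_0_compat; lra]).
  assert (He1 : e <= w / 2) by apply Rmin_l.
  assert (He2 : L * e <= D w / 2).
  { apply Rle_trans with (L * (D w / (2 * L + 2))); [apply Rmult_le_compat_l, Rmin_r; lra|].
    apply (Rmult_le_reg_r (2 * L + 2)); [lra|]. field_simplify; nra. }
  assert (Hsub : forall x y, 0 <= x <= y -> y <= 1 -> ex_RInt D x y).
  { intros x y Hx Hy. apply (ex_RInt_Chasles_2 D 0); [lra|].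
    apply (ex_RInt_Chasles_1 D 0 y 1); [lra|exact Hex]. }
  rewrite <- (RInt_Chasles D 0 w 1), <- (RInt_Chasles D 0 (w - e) w) in H0
    by (apply Hsub; lra).
  assert (0 <= RInt D 0 (w - e))
    by (apply RInt_ge_0; [lra|apply Hsub; lra|intros; apply Hpos; lra]).
  assert (0 <= RInt D w 1) by (apply RInt_ge_0; [lra|apply Hsub; lra|intros; apply Hpos; lra]).
  assert (H3 : RInt (fun _ => D w / 2) (w - e) w <= RInt D (w - e) w).
  { apply RInt_le; [lra|apply ex_RInt_const|apply Hsub; lra|].
    intros x Hx. pose proof (Hlip x w ltac:(lra) ltac:(lra) ltac:(lra)).
    assert (L * (w - x) <= L * e) by (apply Rmult_le_compat_l; lra). lra. }
  rewrite RInt_const in H3. change ((w - (w - e)) * (D w / 2) <= RInt D (w - e) w) in H3.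
  change (RInt D 0 (w - e) + RInt D (w - e) w + RInt D w 1 = 0) in H0.
  assert (0 < (w - (w - e)) * (D w / 2)) by (apply Rmult_lt_0_compat; lra). lra.
Qed.

Definition row_eq (C X : R -> R -> R) (v : R) : Prop := forall u, I01 u -> C u v = X u v.

Section Equality.
Variable C : R -> R -> R.
Hypothesis HC : is_copula C.
Hypothesis Heq : xi C = Rabs (rho C).

Let I01_of_open v : 0 < v < 1 -> I01 v.
Proof. unfold I01; lra. Qed.

Lemma deficit_vanishes s : s = 1 /\ is_SI C \/ s = -1 /\ is_SD C ->
  forall v, 0 < v < 1 -> deficit C s v = 0.
Proof.
  intros Hs. destruct (RInt_deficit C s HC Hs) as [Hex E].
  pose proof (xi_le_signed_rho C s HC Hs).
  assert (s * rho C <= Rabs (rho C))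
    by (destruct Hs as [[-> _]|[-> _]];
        [pose proof (Rle_abs (rho C))|pose proof (Rabs_maj2 (rho C))]; lra).
  apply (eq0_of_RInt_eq0 _ 5); [lra|exact Hex|rewrite E; lra| |].
  - intros v Hv. apply deficit_nonneg; auto.
  - intros v w Hv Hvw Hw. apply deficit_left_lipschitz; auto; unfold I01; lra.
Qed.

Lemma rows_SI : is_SI C -> forall v, 0 < v < 1 -> row_eq C Pi v \/ row_eq C M v.
Proof.
  intros HSI v Hv'. pose proof (I01_of_open v Hv') as Hv.
  pose proof (deficit_vanishes 1 (or_introl (conj eq_refl HSI)) v Hv') as HD.
  unfold deficit, xi_row, rho_row in HD.
  destruct HC as (_ & _ & C0 & _ & C1 & _).
  destruct (concave_dichotomy_cases (fun s => C s v) v (HSI v Hv)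
              (fun x y => copula_row_chord C HC v x y Hv) (C0 v Hv) (C1 v Hv)) as [H|H].
  - apply chord_dichotomy_of_small_slack;
      [exact (HSI v Hv)|intros; apply copula_row_chord; auto|].
    intros n Hn. pose proof (row_bound_SI C v HC HSI Hv n Hn). lra.
  - left; intros u Hu; rewrite H by exact Hu; reflexivity.
  - right; intros u Hu; rewrite H by exact Hu; reflexivity.
Qed.

Lemma rows_SD : is_SD C -> forall v, 0 < v < 1 -> row_eq C Pi v \/ row_eq C W v.
Proof.
  intros HSD v Hv'. pose proof (I01_of_open v Hv') as Hv.
  pose proof (deficit_vanishes (-1) (or_intror (conj eq_refl HSD)) v Hv') as HD.
  unfold deficit, xi_row, rho_row in HD.
  destruct HC as (_ & _ & C0 & _ & C1 & _).
  assert (h0 : v - C (1 - 0) v = 0) by (rewrite Rminus_0_r, C1 by exact Hv; ring).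
  assert (h1 : v - C (1 - 1) v = v) by (rewrite Rminus_diag, C0 by exact Hv; ring).
  destruct (concave_dichotomy_cases (fun u => v - C (1 - u) v) v
              (SD_reflected_row_concave C v HSD Hv)
              (fun x y => copula_reflected_row_chord C HC v x y Hv) h0 h1) as [H|H].
  - apply chord_dichotomy_of_small_slack;
      [apply SD_reflected_row_concave; auto|intros; apply copula_reflected_row_chord; auto|].
    intros n Hn. pose proof (row_bound_SD C v HC HSD Hv n Hn). lra.
  - left; intros u Hu. unfold I01 in Hu. pose proof (H (1 - u) ltac:(unfold I01; lra)).
    replace (1 - (1 - u)) with u in * by ring. unfold Pi; lra.
  - right; intros u Hu. unfold I01 in Hu. pose proof (H (1 - u) ltac:(unfold I01; lra)).
    replace (1 - (1 - u)) with u in * by ring. unfold W, Rmax; unfold Rmin in *.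
    destruct (Rle_dec (1 - u) v), (Rle_dec (u + v - 1) 0); lra.
Qed.

Lemma rows_M_Pi_exclusive v1 v2 : 0 < v1 < 1 -> 0 < v2 < 1 ->
  row_eq C M v1 -> row_eq C Pi v2 -> False.
Proof.
  intros H1 H2 R1 R2. pose proof (I01_of_open v1 H1). pose proof (I01_of_open v2 H2).
  assert (E1 : C v1 v1 = v1) by (rewrite R1 by auto; apply Rmin_left; lra).
  assert (E2 : C v1 v2 = v1 * v2) by (rewrite R2 by auto; reflexivity).
  destruct (Rle_dec v1 v2).
  - pose proof (copula_nondecr_r C HC v1 v1 v2 ltac:(auto) ltac:(auto) ltac:(auto) ltac:(lra)).
    nra.
  - pose proof (copula_lipschitz_r C HC v1 v2 v1 ltac:(auto) ltac:(auto) ltac:(auto) ltac:(lra)).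
    nra.
Qed.

Lemma rows_W_Pi_exclusive v1 v2 : 0 < v1 < 1 -> 0 < v2 < 1 ->
  row_eq C W v1 -> row_eq C Pi v2 -> False.
Proof.
  intros H1 H2 R1 R2. pose proof (I01_of_open v1 H1). pose proof (I01_of_open v2 H2).
  assert (Hu : I01 (1 - v1)) by (unfold I01; lra).
  assert (E1 : C (1 - v1) v1 = 0) by (rewrite R1 by auto; apply Rmax_right; lra).
  assert (E2 : C (1 - v1) v2 = (1 - v1) * v2) by (rewrite R2 by auto; reflexivity).
  destruct (Rle_dec v1 v2).
  - pose proof (copula_lipschitz_r C HC (1 - v1) v1 v2 Hu ltac:(auto) ltac:(auto) ltac:(lra)).
    nra.
  - pose proof (copula_nondecr_r C HC (1 - v1) v2 v1 Hu ltac:(auto) ltac:(auto) ltac:(lra)).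
    nra.
Qed.

Lemma eq_on_square_of_rows X :
  (forall u, I01 u -> X u 0 = 0) -> (forall u, I01 u -> X u 1 = u) ->
  (forall v1 v2, 0 < v1 < 1 -> 0 < v2 < 1 -> row_eq C X v1 -> row_eq C Pi v2 -> False) ->
  (forall v, 0 < v < 1 -> row_eq C Pi v \/ row_eq C X v) ->
  eq_on_square C Pi \/ eq_on_square C X.
Proof.
  intros X0 X1 Hexcl Hrows.
  assert (Hext : forall Y, (forall u, I01 u -> Y u 0 = 0) -> (forall u, I01 u -> Y u 1 = u) ->
            (forall v, 0 < v < 1 -> row_eq C Y v) -> eq_on_square C Y).
  { intros Y Y0 Y1 HY u v Hu Hv. destruct HC as (_ & C0 & _ & C1 & _).
    destruct (Req_dec v 0) as [->|]; [rewrite C0, Y0; auto|].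
    destruct (Req_dec v 1) as [->|]; [rewrite C1, Y1; auto|].
    apply HY; auto. unfold I01 in Hv; lra. }
  destruct (classic (forall v, 0 < v < 1 -> row_eq C Pi v)) as [A|A].
  - left. apply Hext; auto; intros; unfold Pi; ring.
  - right. apply not_all_ex_not in A as [v1 A].
    apply imply_to_and in A as [Hv1 A].
    assert (B : row_eq C X v1) by (destruct (Hrows v1 Hv1); tauto).
    apply Hext; auto. intros v2 Hv2.
    destruct (Hrows v2 Hv2); [exfalso; apply (Hexcl v1 v2)|]; auto.
Qed.

Lemma equality_cases : is_SI C \/ is_SD C ->
  eq_on_square C W \/ eq_on_square C Pi \/ eq_on_square C M.
Proof.
  intros [HSI|HSD].
  - assert (M0 : forall u, I01 u -> M u 0 = 0) by (intros u Hu; apply Rmin_right, Hu).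
    assert (M1 : forall u, I01 u -> M u 1 = u) by (intros u Hu; apply Rmin_left, Hu).
    destruct (eq_on_square_of_rows M M0 M1 rows_M_Pi_exclusive (rows_SI HSI)); auto.
  - assert (W0 : forall u, I01 u -> W u 0 = 0)
      by (intros u Hu; unfold I01 in Hu; apply Rmax_right; lra).
    assert (W1 : forall u, I01 u -> W u 1 = u)
      by (intros u Hu; unfold W; rewrite Rmax_left; unfold I01 in Hu; lra).
    destruct (eq_on_square_of_rows W W0 W1 rows_W_Pi_exclusive (rows_SD HSD)); auto.
Qed.

End Equality.

(** * The copulas W, Pi and M *)

Lemma Derive_ext_open (f g : R -> R) t a b : a < t < b -> (forall y, a < y < b -> f y = g y) ->
  Derive f t = Derive g t.
Proof.
  intros Ht H. apply Derive_ext_loc.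
  apply (locally_interval _ t a b); simpl; try lra. intros; apply H; lra.
Qed.

Lemma xi_eq_on_square C D : eq_on_square C D -> xi C = xi D.
Proof.
  intros H. unfold xi, d1. do 2 f_equal. apply RInt_ext_open; [lra|intros v Hv].
  apply RInt_ext_open; [lra|intros t Ht]. f_equal.
  apply (Derive_ext_open _ _ t 0 1); auto. intros; apply H; unfold I01; lra.
Qed.

Lemma rho_eq_on_square C D : eq_on_square C D -> rho C = rho D.
Proof.
  intros H. unfold rho. do 2 f_equal. apply RInt_ext_open; [lra|intros v Hv].
  apply RInt_ext_open; [lra|intros; apply H; unfold I01; lra].
Qed.

Lemma xi_Pi : xi Pi = 0.
Proof.
  unfold xi. rewrite (RInt_ext_open _ (fun v => v ^ 2) 0 1); [|lra|].
  - rewrite (RInt_primitive _ (fun v => v ^ 3 / 3)); [field_R|..];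
      intros; auto_derive; auto; field_R.
  - intros v Hv. rewrite (RInt_ext_open _ (fun _ => v ^ 2) 0 1), RInt_const_R; [ring|lra|].
    intros t Ht. unfold d1, Pi. f_equal. apply is_derive_unique. auto_derive; auto; field_R.
Qed.

Lemma rho_Pi : rho Pi = 0.
Proof.
  unfold rho. rewrite (RInt_ext_open _ (fun v => v / 2) 0 1); [|lra|].
  - rewrite (RInt_primitive _ (fun v => v ^ 2 / 4)); [field_R|..];
      intros; auto_derive; auto; field_R.
  - intros v Hv. unfold Pi. rewrite (RInt_primitive _ (fun u => u ^ 2 * v / 2)); [field_R|..];
      intros; auto_derive; auto; field_R.
Qed.

Lemma d1_M_below t v : 0 < t < v -> d1 M t v = 1.
Proof.
  intros H. unfold d1.
  rewrite (Derive_ext_open _ (fun s => s) t (t - 1) v), Derive_id; [reflexivity|lra|].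
  intros y Hy. apply Rmin_left; lra.
Qed.

Lemma d1_M_above t v : v < t -> d1 M t v = 0.
Proof.
  intros H. unfold d1. rewrite (Derive_ext_open _ (fun _ => v) t v (t + 1)), Derive_const;
    [reflexivity|lra|].
  intros y Hy. apply Rmin_right; lra.
Qed.

Lemma xi_M : xi M = 1.
Proof.
  unfold xi. rewrite (RInt_ext_open _ (fun v => v) 0 1); [|lra|].
  - rewrite (RInt_primitive _ (fun v => v ^ 2 / 2)); [field_R|..];
      intros; auto_derive; auto; field_R.
  - intros v Hv. rewrite (RInt_split_at _ (fun _ => 1) (fun _ => 0) v), !RInt_const_R;
      [ring|lra| | |apply ex_RInt_const..].
    + intros t Ht. rewrite d1_M_below by lra. ring.
    + intros t Ht. rewrite d1_M_above by lra. ring.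
Qed.

Lemma rho_M : rho M = 1.
Proof.
  unfold rho. rewrite (RInt_ext_open _ (fun v => v - v ^ 2 / 2) 0 1); [|lra|].
  - rewrite (RInt_primitive _ (fun v => v ^ 2 / 2 - v ^ 3 / 6)); [field_R|..];
      intros; auto_derive; auto; field_R.
  - intros v Hv.
    destruct (ex_RInt_primitive (fun u => u) (fun u => u ^ 2 / 2) 0 v) as [E1 E2];
      [intros; auto_derive; auto; field_R|intros; auto_derive; auto|].
    rewrite (RInt_split_at _ (fun u => u) (fun _ => v) v), E2, RInt_const_R;
      [field_R|lra| | |exact E1|apply ex_RInt_const].
    + intros t Ht. apply Rmin_left; lra.
    + intros t Ht. apply Rmin_right; lra.
Qed.

Lemma d1_W_below t v : t < 1 - v -> d1 W t v = 0.
Proof.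
  intros H. unfold d1. rewrite (Derive_ext_open _ (fun _ => 0) t (t - 1) (1 - v)), Derive_const;
    [reflexivity|lra|].
  intros y Hy. apply Rmax_right; lra.
Qed.

Lemma d1_W_above t v : 1 - v < t -> d1 W t v = 1.
Proof.
  intros H. unfold d1. rewrite (Derive_ext_open _ (fun s => s + v - 1) t (1 - v) (t + 1));
    [|lra|intros y Hy; apply Rmax_left; lra].
  apply is_derive_unique. auto_derive; auto; field_R.
Qed.

Lemma xi_W : xi W = 1.
Proof.
  unfold xi. rewrite (RInt_ext_open _ (fun v => v) 0 1); [|lra|].
  - rewrite (RInt_primitive _ (fun v => v ^ 2 / 2)); [field_R|..];
      intros; auto_derive; auto; field_R.
  - intros v Hv. rewrite (RInt_split_at _ (fun _ => 0) (fun _ => 1) (1 - v)), !RInt_const_R;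
      [ring|lra| | |apply ex_RInt_const..].
    + intros t Ht. rewrite d1_W_below by lra. ring.
    + intros t Ht. rewrite d1_W_above by lra. ring.
Qed.

Lemma rho_W : rho W = -1.
Proof.
  unfold rho. rewrite (RInt_ext_open _ (fun v => v ^ 2 / 2) 0 1); [|lra|].
  - rewrite (RInt_primitive _ (fun v => v ^ 3 / 6)); [field_R|..];
      intros; auto_derive; auto; field_R.
  - intros v Hv.
    destruct (ex_RInt_primitive (fun u => u + v - 1) (fun u => u ^ 2 / 2 + (v - 1) * u) (1 - v) 1)
      as [E1 E2]; [intros; auto_derive; auto; field_R|intros; auto_derive; auto|].
    rewrite (RInt_split_at _ (fun _ => 0) (fun u => u + v - 1) (1 - v)), E2, RInt_const_R;
      [field_R|lra| | |apply ex_RInt_const|exact E1].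
    + intros t Ht. apply Rmax_right; lra.
    + intros t Ht. apply Rmax_left; lra.
Qed.

Lemma xi_eq_abs_rho_of_extremal C :
  eq_on_square C W \/ eq_on_square C Pi \/ eq_on_square C M -> xi C = Rabs (rho C).
Proof.
  intros [H|[H|H]]; rewrite (xi_eq_on_square C _ H), (rho_eq_on_square C _ H).
  - rewrite xi_W, rho_W, Rabs_left by lra. ring.
  - rewrite xi_Pi, rho_Pi, Rabs_R0. reflexivity.
  - rewrite xi_M, rho_M, Rabs_pos_eq by lra. reflexivity.
Qed.

Theorem theorem1p3 (C : R -> R -> R) (HC : is_copula C)
  (Hmon : is_SI C \/ is_SD C) :
  xi C <= Rabs (rho C) /\
  (xi C = Rabs (rho C) <->
     (eq_on_square C W \/ eq_on_square C Pi \/ eq_on_square C M)).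
Proof.
  split; [|split].
  - destruct Hmon as [H|H].
    + pose proof (xi_le_signed_rho C 1 HC (or_introl (conj eq_refl H))).
      pose proof (Rle_abs (rho C)). lra.
    + pose proof (xi_le_signed_rho C (-1) HC (or_intror (conj eq_refl H))).
      pose proof (Rabs_maj2 (rho C)). lra.
  - intros Heq. exact (equality_cases C HC Heq Hmon).
  - apply xi_eq_abs_rho_of_extremal.
Qed.
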